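(* Let $\phi(x)$ be a formula of Peano Arithmetic (PA) with a single free variable $x$. Then there exist sentences (formulas with no free variables) $\sigma$ and $\tau$ of PA such that $$\mathrm{PA} \vdash \sigma \leftrightarrow \phi(\lceil \tau \rceil) \quad\text{and}\quad \mathrm{PA} \vdash \tau \leftrightarrow \lnot \phi(\lceil \sigma \rceil).$$
   Context: Peano Arithmetic (PA) is the first-order theory in the language with constant $0$, unary function symbol $S$ (successor), binary function symbols $+,*$, binary relation symbols $=,<,>$, the usual logical connectives and quantifiers, and variables $x_0,x_1,x_2,\dots$, with the standard axioms for successor, addition, multiplication, equality and the induction scheme. $\mathrm{PA}\vdash\chi$ means $\chi$ is derivable in PA. For a formula $\psi$, $\lceil \psi \rceil\in\mathbb{N}$ denotes its Gödel number under a fixed effective injective encoding of formulas by natural numbers (e.g. assign each symbol a positive integer code and map the string $s_1\cdots s_k$ with codes $n_1,\dots,n_k$ to $2^{n_1}3^{n_2}\cdots p_k^{n_k}$). When a natural number $n$ appears as an argument inside a PA formula, it stands for the numeral $S^{(n)}0 = S\cdots S0$ ($n$ copies of $S$); thus $\phi(\lceil\tau\rceil)$ is the result of substituting the numeral for $\lceil\tau\rceil$ for the free variable $x$ of $\phi$. *)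

From Stdlib Require Import Arith List Bool.

Inductive term : Type :=
| tvar : nat -> term
| tzero : term
| tsucc : term -> term
| tplus : term -> term -> term
| tmult : term -> term -> term.

Inductive form : Type :=
| feq : term -> term -> form
| flt : term -> term -> form
| fgt : term -> term -> form
| fneg : form -> form
| fimp : form -> form -> form
| fall : nat -> form -> form.

Definition fand (a b : form) : form := fneg (fimp a (fneg b)).
Definition for_ (a b : form) : form := fimp (fneg a) b.
Definition fiff (a b : form) : form := fand (fimp a b) (fimp b a).
Definition fex (x : nat) (a : form) : form := fneg (fall x (fneg a)).

Fixpoint occurs_t (x : nat) (t : term) : bool :=
  match t with
  | tvar y => Nat.eqb x y
  | tzero => false
  | tsucc s => occurs_t x s
  | tplus a b | tmult a b => occurs_t x a || occurs_t x b
  end.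

Fixpoint free_in (x : nat) (f : form) : bool :=
  match f with
  | feq a b | flt a b | fgt a b => occurs_t x a || occurs_t x b
  | fneg g => free_in x g
  | fimp g h => free_in x g || free_in x h
  | fall y g => negb (Nat.eqb x y) && free_in x g
  end.

Definition sentence (f : form) : Prop := forall x, free_in x f = false.

Fixpoint subst_t (x : nat) (s t : term) : term :=
  match t with
  | tvar y => if Nat.eqb x y then s else tvar y
  | tzero => tzero
  | tsucc u => tsucc (subst_t x s u)
  | tplus a b => tplus (subst_t x s a) (subst_t x s b)
  | tmult a b => tmult (subst_t x s a) (subst_t x s b)
  end.

Fixpoint subst (x : nat) (s : term) (f : form) : form :=
  match f with
  | feq a b => feq (subst_t x s a) (subst_t x s b)
  | flt a b => flt (subst_t x s a) (subst_t x s b)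
  | fgt a b => fgt (subst_t x s a) (subst_t x s b)
  | fneg g => fneg (subst x s g)
  | fimp g h => fimp (subst x s g) (subst x s h)
  | fall y g => if Nat.eqb x y then fall y g else fall y (subst x s g)
  end.

Fixpoint substitutable (x : nat) (t : term) (f : form) : Prop :=
  match f with
  | feq _ _ | flt _ _ | fgt _ _ => True
  | fneg g => substitutable x t g
  | fimp g h => substitutable x t g /\ substitutable x t h
  | fall y g => free_in x (fall y g) = false \/
                (occurs_t y t = false /\ substitutable x t g)
  end.

Fixpoint num (n : nat) : term :=
  match n with
  | 0 => tzero
  | S m => tsucc (num m)
  end.

Definition cpair (a b : nat) : nat := (a + b) * (a + b + 1) / 2 + b.

Fixpoint code_t (t : term) : nat :=
  match t with
  | tvar n => cpair 0 n
  | tzero => cpair 1 0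
  | tsucc s => cpair 2 (code_t s)
  | tplus a b => cpair 3 (cpair (code_t a) (code_t b))
  | tmult a b => cpair 4 (cpair (code_t a) (code_t b))
  end.

Fixpoint code (f : form) : nat :=
  match f with
  | feq a b => cpair 0 (cpair (code_t a) (code_t b))
  | flt a b => cpair 1 (cpair (code_t a) (code_t b))
  | fgt a b => cpair 2 (cpair (code_t a) (code_t b))
  | fneg g => cpair 3 (code g)
  | fimp g h => cpair 4 (cpair (code g) (code h))
  | fall y g => cpair 5 (cpair y (code g))
  end.

Definition x0 := tvar 0.
Definition x1 := tvar 1.
Definition x2 := tvar 2.

Inductive logical_axiom : form -> Prop :=
| LA1 : forall a b, logical_axiom (fimp a (fimp b a))
| LA2 : forall a b c,
    logical_axiom (fimp (fimp a (fimp b c)) (fimp (fimp a b) (fimp a c)))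
| LA3 : forall a b,
    logical_axiom (fimp (fimp (fneg b) (fneg a)) (fimp (fimp (fneg b) a) b))
| LA4 : forall x t a, substitutable x t a ->
    logical_axiom (fimp (fall x a) (subst x t a))
| LA5 : forall x a b, free_in x a = false ->
    logical_axiom (fimp (fall x (fimp a b)) (fimp a (fall x b)))
| LEq_refl : logical_axiom (feq x0 x0)
| LEq_eq : logical_axiom (fimp (feq x0 x1) (fimp (feq x0 x2) (feq x1 x2)))
| LEq_succ : logical_axiom (fimp (feq x0 x1) (feq (tsucc x0) (tsucc x1)))
| LEq_plusl : logical_axiom (fimp (feq x0 x1) (feq (tplus x0 x2) (tplus x1 x2)))
| LEq_plusr : logical_axiom (fimp (feq x0 x1) (feq (tplus x2 x0) (tplus x2 x1)))
| LEq_multl : logical_axiom (fimp (feq x0 x1) (feq (tmult x0 x2) (tmult x1 x2)))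
| LEq_multr : logical_axiom (fimp (feq x0 x1) (feq (tmult x2 x0) (tmult x2 x1)))
| LEq_ltl : logical_axiom (fimp (feq x0 x1) (fimp (flt x0 x2) (flt x1 x2)))
| LEq_ltr : logical_axiom (fimp (feq x0 x1) (fimp (flt x2 x0) (flt x2 x1)))
| LEq_gtl : logical_axiom (fimp (feq x0 x1) (fimp (fgt x0 x2) (fgt x1 x2)))
| LEq_gtr : logical_axiom (fimp (feq x0 x1) (fimp (fgt x2 x0) (fgt x2 x1))).

(** Nonlogical axioms of PA (free variables implicitly universally closed via Gen). *)
Inductive PA_axiom : form -> Prop :=
| PA_succ0 : PA_axiom (fneg (feq (tsucc x0) tzero))
| PA_succinj : PA_axiom (fimp (feq (tsucc x0) (tsucc x1)) (feq x0 x1))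
| PA_plus0 : PA_axiom (feq (tplus x0 tzero) x0)
| PA_plusS : PA_axiom (feq (tplus x0 (tsucc x1)) (tsucc (tplus x0 x1)))
| PA_mult0 : PA_axiom (feq (tmult x0 tzero) tzero)
| PA_multS : PA_axiom (feq (tmult x0 (tsucc x1)) (tplus (tmult x0 x1) x0))
| PA_lt : PA_axiom (fiff (flt x0 x1) (fex 2 (feq (tplus x0 (tsucc x2)) x1)))
| PA_gt : PA_axiom (fiff (fgt x0 x1) (flt x1 x0))
| PA_ind : forall x a,
    PA_axiom (fimp (subst x tzero a)
               (fimp (fall x (fimp a (subst x (tsucc (tvar x)) a))) (fall x a))).

Inductive PA_proves : form -> Prop :=
| Pr_log : forall a, logical_axiom a -> PA_proves a
| Pr_ax : forall a, PA_axiom a -> PA_proves a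
| Pr_mp : forall a b, PA_proves (fimp a b) -> PA_proves a -> PA_proves b
| Pr_gen : forall x a, PA_proves a -> PA_proves (fall x a).

From Stdlib Require Import Arith List Bool Lia Factorial Classical.
Import ListNotations.

(** Mutual diagonalisation.  For a pair [u = cpair rA rB] let [G_sel(u)] be the code of
    [plug M u R], the sentence [forall x_M, x_M = u -> R], where [R] is the formula with code [rB]
    if [sel] and [rA] otherwise.  Put [RA(x_M) := exists v, G_true(x_M) = v /\ phi(v)] and
    [RB(x_M) := ~ exists v, G_false(x_M) = v /\ phi(v)], let [k] pair the codes of [RA] and [RB],
    and take [sigma := plug M k RA], [tau := plug M k RB].  Then [sigma <-> RA(k) <-> phi(G_true k)]
    and [G_true k] is the code of [tau]; symmetrically for [tau].

    What PA must know about [G] is that its graph is defined by a formula [graphF] with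
    [PA |- graphF(k, G k)] and [PA |- graphF(k, v) -> v = G k].  The graph is written as a bounded
    formula (pairing is a polynomial equation, and the codes of the numerals [0, ..., k] are
    coded by Gödel's beta function) whose witnesses lie below a bound [P]; requiring [P] to be
    least makes the graph provably single-valued, and PA decides every bounded sentence. *)

Notation "|- A" := (PA_proves A) (at level 70).

(** * Propositional logic *)

Lemma mp A B : |- fimp A B -> |- A -> |- B.
Proof. exact (Pr_mp A B). Qed.

Ltac premise H := eapply mp; [|exact H].

Lemma ax1 A B : |- fimp A (fimp B A).
Proof. apply Pr_log; constructor. Qed.

Lemma ax2 A B C : |- fimp (fimp A (fimp B C)) (fimp (fimp A B) (fimp A C)).
Proof. apply Pr_log; constructor. Qed.

Lemma ax3 A B : |- fimp (fimp (fneg B) (fneg A)) (fimp (fimp (fneg B) A) B).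
Proof. apply Pr_log; constructor. Qed.

Lemma imp_refl A : |- fimp A A.
Proof. premise (ax1 A A). premise (ax1 A (fimp A A)). apply ax2. Qed.

Inductive derives (G : list form) : form -> Prop :=
| der_hyp A : In A G -> derives G A
| der_thm A : |- A -> derives G A
| der_mp A B : derives G (fimp A B) -> derives G A -> derives G B.

Lemma deduction G A B : derives (A :: G) B -> derives G (fimp A B).
Proof.
  induction 1 as [B [<-|HB]|B HB|B C _ IHBC _ IHB].
  - apply der_thm, imp_refl.
  - eapply der_mp; [apply der_thm, ax1|]. now apply der_hyp.
  - eapply der_mp; [apply der_thm, ax1|]. now apply der_thm.
  - eapply der_mp; [eapply der_mp; [apply der_thm, ax2|exact IHBC]|exact IHB].
Qed.

Lemma derives_nil A : derives [] A -> |- A.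
Proof. induction 1 as [A []| |]; eauto using mp. Qed.

Ltac hyp := apply der_hyp; simpl; tauto.
Ltac dapply H :=
  first [ apply der_thm; eapply H
        | eapply der_mp; [apply der_thm; eapply H|]
        | eapply der_mp; [eapply der_mp; [apply der_thm; eapply H|]|] ].

Lemma negneg_elim A : |- fimp (fneg (fneg A)) A.
Proof.
  apply derives_nil, deduction.
  dapply (ax3 (fneg A) A); [dapply ax1; hyp | apply der_thm, imp_refl].
Qed.

Lemma negneg_intro A : |- fimp A (fneg (fneg A)).
Proof.
  apply derives_nil, deduction.
  dapply (ax3 A (fneg (fneg A))); [apply der_thm, negneg_elim | dapply ax1; hyp].
Qed.

Lemma neg_imp A B : |- fimp (fneg A) (fimp A B).
Proof. apply derives_nil, deduction, deduction. dapply (ax3 A B); dapply ax1; hyp. Qed.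

Lemma contra_neg A B : |- fimp (fimp (fneg B) (fneg A)) (fimp A B).
Proof. apply derives_nil, deduction, deduction. dapply (ax3 A B); [hyp | dapply ax1; hyp]. Qed.

Lemma contra A B : |- fimp (fimp A B) (fimp (fneg B) (fneg A)).
Proof.
  apply derives_nil, deduction. dapply contra_neg. apply deduction.
  dapply negneg_intro. eapply der_mp; [hyp|]. dapply negneg_elim. hyp.
Qed.

Lemma imp_neg_neg A B : |- fimp A (fimp (fneg B) (fneg (fimp A B))).
Proof.
  apply derives_nil, deduction. dapply contra. apply deduction.
  eapply der_mp; hyp.
Qed.

Lemma by_cases A B : |- fimp (fimp A B) (fimp (fimp (fneg A) B) B).
Proof.
  apply derives_nil, deduction, deduction.
  dapply (ax3 (fneg A) B); dapply contra; hyp.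
Qed.

(** Propositional skeletons of formulas: tautologies are discharged by reflection, through
    Kalmár's proof of completeness. *)
Inductive pform := PVar (n : nat) | PNeg (p : pform) | PImp (p q : pform).

Definition patom (l : list form) (n : nat) : form := nth n l (feq tzero tzero).

Fixpoint pinterp (l : list form) (p : pform) : form :=
  match p with
  | PVar n => patom l n
  | PNeg p => fneg (pinterp l p)
  | PImp p q => fimp (pinterp l p) (pinterp l q)
  end.

Fixpoint peval (bs : list bool) (p : pform) : bool :=
  match p with
  | PVar n => nth n bs false
  | PNeg p => negb (peval bs p)
  | PImp p q => implb (peval bs p) (peval bs q)
  end.

Fixpoint pvars_bound (p : pform) : nat :=
  match p with
  | PVar n => S n
  | PNeg p => pvars_bound p
  | PImp p q => max (pvars_bound p) (pvars_bound q)
  end.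

Fixpoint ptaut (n : nat) (p : pform) (bs : list bool) : bool :=
  match n with
  | 0 => peval bs p
  | S n => ptaut n p (bs ++ [true]) && ptaut n p (bs ++ [false])
  end.

Definition literal (b : bool) (A : form) : form := if b then A else fneg A.

Definition literals (l : list form) (bs : list bool) : list form :=
  map (fun i => literal (nth i bs false) (patom l i)) (rev (seq 0 (length bs))).

Lemma literals_snoc l bs b :
  literals l (bs ++ [b]) = literal b (patom l (length bs)) :: literals l bs.
Proof.
  unfold literals. rewrite length_app, Nat.add_1_r, seq_S, rev_app_distr. simpl.
  rewrite app_nth2, Nat.sub_diag by lia. f_equal.
  apply map_ext_in. intros i Hi. rewrite <- in_rev, in_seq in Hi. now rewrite app_nth1 by lia.
Qed.

Lemma kalmar l bs p :
  pvars_bound p <= length bs -> derives (literals l bs) (literal (peval bs p) (pinterp l p)).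
Proof.
  induction p as [n|p IHp|p IHp q IHq]; simpl; intros Hp.
  - apply der_hyp, in_map_iff. exists n. rewrite <- in_rev, in_seq. split; auto; lia.
  - specialize (IHp Hp). destruct (peval bs p); simpl in *; [dapply negneg_intro|]; exact IHp.
  - specialize (IHp ltac:(lia)). specialize (IHq ltac:(lia)).
    destruct (peval bs p), (peval bs q); simpl in *.
    + dapply ax1; exact IHq.
    + dapply imp_neg_neg; assumption.
    + dapply ax1; exact IHq.
    + dapply neg_imp; exact IHp.
Qed.

Lemma ptaut_derives l n p bs :
  pvars_bound p <= length bs + n -> ptaut n p bs = true -> derives (literals l bs) (pinterp l p).
Proof.
  revert bs; induction n as [|n IHn]; simpl; intros bs Hp Ht.
  - pose proof (kalmar l bs p ltac:(lia)) as K. now rewrite Ht in K.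
  - apply andb_true_iff in Ht as [Ht Hf].
    assert (Hb : forall b, pvars_bound p <= length (bs ++ [b]) + n)
      by (intros; rewrite length_app; simpl; lia).
    pose proof (IHn _ (Hb true) Ht) as Dt. pose proof (IHn _ (Hb false) Hf) as Df.
    rewrite literals_snoc in Dt, Df. simpl in Dt, Df. apply deduction in Dt, Df.
    dapply by_cases; [exact Dt | exact Df].
Qed.

Lemma ptaut_sound l p : ptaut (pvars_bound p) p [] = true -> |- pinterp l p.
Proof. intros H. apply derives_nil. exact (ptaut_derives l _ p [] (le_n _) H). Qed.

Ltac lookup_atom a l k :=
  lazymatch l with
  | nil => k 0 (cons a nil)
  | cons ?b ?l' =>
      tryif constr_eq a b then k 0 l
      else lookup_atom a l' ltac:(fun i l2 => k (S i) (cons b l2))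
  end.

Ltac reify F l k :=
  lazymatch F with
  | fimp ?a ?b => reify a l ltac:(fun pa l1 => reify b l1 ltac:(fun pb l2 => k (PImp pa pb) l2))
  | fneg ?a => reify a l ltac:(fun pa l1 => k (PNeg pa) l1)
  | _ => lookup_atom F l ltac:(fun i l1 => k (PVar i) l1)
  end.

Ltac taut :=
  repeat match goal with X := _ |- _ => progress (unfold X) end;
  unfold fiff, fand, for_, fex;
  lazymatch goal with
  | |- PA_proves ?F =>
    reify F (@nil form) ltac:(fun p l =>
      change (PA_proves (pinterp l p)); apply (ptaut_sound l p); vm_compute; reflexivity)
  end.

(** * Substitution *)

Lemma subst_t_notin y s t : occurs_t y t = false -> subst_t y s t = t.
Proof.
  induction t; simpl; intros H; rewrite ?orb_false_iff in H; try (f_equal; tauto).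
  now rewrite H.
Qed.

Lemma subst_notin y s f : free_in y f = false -> subst y s f = f.
Proof.
  induction f; simpl; intros H; rewrite ?orb_false_iff in H;
    try (f_equal; try apply subst_t_notin; tauto).
  destruct (Nat.eqb y n); simpl in H; f_equal; auto.
Qed.

Definition closed_t (t : term) : Prop := forall y, occurs_t y t = false.

Lemma num_closed n : closed_t (num n).
Proof. induction n; intros y; simpl; auto. Qed.

Lemma subst_t_num z u n : subst_t z u (num n) = num n.
Proof. apply subst_t_notin, num_closed. Qed.

Lemma substitutable_closed x t f : closed_t t -> substitutable x t f.
Proof. intros C; induction f; simpl; auto. Qed.

Lemma substitutable_num x n f : substitutable x (num n) f.
Proof. apply substitutable_closed, num_closed. Qed.

Lemma substitutable_var_self x f : substitutable x (tvar x) f.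
Proof.
  induction f; simpl; auto.
  destruct (Nat.eqb_spec x n); [left; reflexivity|right; split; auto; apply Nat.eqb_neq; auto].
Qed.

Lemma subst_t_var_self x t : subst_t x (tvar x) t = t.
Proof. induction t; simpl; try congruence. destruct (Nat.eqb_spec x n); congruence. Qed.

Lemma subst_var_self x f : subst x (tvar x) f = f.
Proof.
  induction f; simpl; rewrite ?subst_t_var_self; try congruence.
  destruct (Nat.eqb x n); congruence.
Qed.

Lemma subst_t_var_same z u : subst_t z u (tvar z) = u.
Proof. simpl. now rewrite Nat.eqb_refl. Qed.

Lemma subst_t_var_other z u w : z <> w -> subst_t z u (tvar w) = tvar w.
Proof. intros H. simpl. now rewrite (proj2 (Nat.eqb_neq z w) H). Qed.

Fixpoint vbound_t (t : term) : nat :=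
  match t with
  | tvar n => S n
  | tzero => 0
  | tsucc s => vbound_t s
  | tplus a b | tmult a b => max (vbound_t a) (vbound_t b)
  end.

Fixpoint vbound (f : form) : nat :=
  match f with
  | feq a b | flt a b | fgt a b => max (vbound_t a) (vbound_t b)
  | fneg g => vbound g
  | fimp g h => max (vbound g) (vbound h)
  | fall z g => max (S z) (vbound g)
  end.

Ltac split_max := repeat match goal with
  | H : Nat.max _ _ <= _ |- _ => apply Nat.max_lub_iff in H as [? ?] end.

Lemma occurs_t_vbound y t : vbound_t t <= y -> occurs_t y t = false.
Proof.
  induction t; cbn -[Nat.max]; intros; split_max; auto.
  - apply Nat.eqb_neq. lia.
  - now rewrite IHt1, IHt2.
  - now rewrite IHt1, IHt2.
Qed.

Lemma free_in_vbound f w : vbound f <= w -> free_in w f = false.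
Proof.
  induction f; cbn -[Nat.max]; intros; split_max; rewrite ?occurs_t_vbound by lia; auto.
  all: try (rewrite IHf1, IHf2 by lia; auto); try (rewrite IHf by lia; apply andb_false_r).
Qed.

Lemma substitutable_vbound x f w : vbound f <= w -> substitutable x (tvar w) f.
Proof.
  induction f; cbn -[Nat.max]; intros; split_max; auto.
  all: try (split; [apply IHf1|apply IHf2]; lia).
  right. split; [apply Nat.eqb_neq; lia|apply IHf; lia].
Qed.

Lemma subst_t_rename x w u t :
  vbound_t t <= w -> subst_t w u (subst_t x (tvar w) t) = subst_t x u t.
Proof.
  induction t; cbn -[Nat.max]; intros; split_max; f_equal; auto.
  destruct (Nat.eqb_spec x n); simpl.
  - now rewrite Nat.eqb_refl.
  - destruct (Nat.eqb_spec w n); auto. lia.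
Qed.

Lemma subst_rename x w u f : vbound f <= w -> subst w u (subst x (tvar w) f) = subst x u f.
Proof.
  induction f; cbn -[Nat.max]; intros; split_max; try (f_equal; apply subst_t_rename; lia).
  - f_equal; auto.
  - f_equal; [apply IHf1|apply IHf2]; lia.
  - destruct (Nat.eqb_spec x n); simpl; (destruct (Nat.eqb_spec w n); [lia|]); f_equal.
    + apply subst_notin, free_in_vbound. lia.
    + apply IHf. lia.
Qed.

Lemma occurs_t_subst_t y x t s :
  occurs_t y (subst_t x t s) = true -> (occurs_t y s = true /\ y <> x) \/ occurs_t y t = true.
Proof.
  induction s; simpl; intros H; try discriminate; auto.
  - destruct (Nat.eqb_spec x n); auto. simpl in H. apply Nat.eqb_eq in H. subst y.
    left. split; [apply Nat.eqb_refl|congruence].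
  - apply orb_true_iff in H as [H|H]; [destruct (IHs1 H)|destruct (IHs2 H)]; auto;
      left; rewrite orb_true_iff; tauto.
  - apply orb_true_iff in H as [H|H]; [destruct (IHs1 H)|destruct (IHs2 H)]; auto;
      left; rewrite orb_true_iff; tauto.
Qed.

Lemma free_in_subst y x t f :
  free_in y (subst x t f) = true -> (free_in y f = true /\ y <> x) \/ occurs_t y t = true.
Proof.
  induction f; simpl; intros H;
    try (apply orb_true_iff in H as [H|H]; [destruct (occurs_t_subst_t _ _ _ _ H)
      |destruct (occurs_t_subst_t _ _ _ _ H)]; auto; left; rewrite orb_true_iff; tauto).
  - auto.
  - apply orb_true_iff in H as [H|H]; [destruct (IHf1 H)|destruct (IHf2 H)]; auto;
      left; rewrite orb_true_iff; tauto.
  - destruct (Nat.eqb_spec x n); simpl in H; pose proof H as H';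
      apply andb_true_iff in H' as [H1 H2]; apply negb_true_iff, Nat.eqb_neq in H1.
    + left. split; [exact H|congruence].
    + destruct (IHf H2) as [[]|]; auto. left. split; [|auto].
      apply andb_true_iff. split; [apply negb_true_iff, Nat.eqb_neq|]; auto.
Qed.

Lemma subst_num_closed phi x n :
  (forall y, free_in y phi = true -> y = x) -> sentence (subst x (num n) phi).
Proof.
  intros Ho y. destruct (free_in y _) eqn:E; auto.
  apply free_in_subst in E as [[E1 E2]|E].
  - apply Ho in E1. congruence.
  - now rewrite num_closed in E.
Qed.

Definition upd (r : nat -> term) (z : nat) (t : term) : nat -> term :=
  fun y => if Nat.eqb y z then t else r y.

Fixpoint tsubst (r : nat -> term) (t : term) : term :=
  match t with
  | tvar y => r y
  | tzero => tzero
  | tsucc a => tsucc (tsubst r a)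
  | tplus a b => tplus (tsubst r a) (tsubst r b)
  | tmult a b => tmult (tsubst r a) (tsubst r b)
  end.

(** Simultaneous substitution; it does not rename bound variables, so it is only used
    with closed terms or on quantifier-free formulas. *)
Fixpoint fsubst (r : nat -> term) (f : form) : form :=
  match f with
  | feq a b => feq (tsubst r a) (tsubst r b)
  | flt a b => flt (tsubst r a) (tsubst r b)
  | fgt a b => fgt (tsubst r a) (tsubst r b)
  | fneg g => fneg (fsubst r g)
  | fimp g h => fimp (fsubst r g) (fsubst r h)
  | fall z g => fall z (fsubst (upd r z (tvar z)) g)
  end.

Lemma tsubst_ext r1 r2 t :
  (forall y, occurs_t y t = true -> r1 y = r2 y) -> tsubst r1 t = tsubst r2 t.
Proof.
  induction t; simpl; intros H; f_equal; auto using Nat.eqb_refl.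
  all: first [apply IHt1|apply IHt2]; intros y Hy; apply H; rewrite Hy; auto using orb_true_r.
Qed.

Lemma fsubst_ext f : forall r1 r2,
  (forall y, free_in y f = true -> r1 y = r2 y) -> fsubst r1 f = fsubst r2 f.
Proof.
  induction f; simpl; intros r1 r2 H;
    try (f_equal; apply tsubst_ext; intros y Hy; apply H; rewrite Hy; auto using orb_true_r; fail).
  - f_equal; auto.
  - f_equal; [apply IHf1|apply IHf2]; intros y Hy; apply H; rewrite Hy; auto using orb_true_r.
  - f_equal. apply IHf. intros y Hy. unfold upd. destruct (Nat.eqb_spec y n); auto.
    apply H, andb_true_iff. split; auto. now apply negb_true_iff, Nat.eqb_neq.
Qed.

Lemma tsubst_var t : tsubst tvar t = t.
Proof. induction t; simpl; f_equal; auto. Qed.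

Lemma fsubst_var f : fsubst tvar f = f.
Proof.
  induction f; simpl; f_equal; auto using tsubst_var.
  rewrite <- IHf at 2. apply fsubst_ext. intros y _. unfold upd.
  destruct (Nat.eqb_spec y n); subst; auto.
Qed.

Lemma fsubst_sentence r f : sentence f -> fsubst r f = f.
Proof.
  intros C. rewrite <- (fsubst_var f) at 2. apply fsubst_ext. intros y Hy. congruence.
Qed.

Lemma subst_t_tsubst z u r t :
  r z = tvar z -> (forall y, y <> z -> occurs_t z (r y) = false) ->
  subst_t z u (tsubst r t) = tsubst (upd r z u) t.
Proof.
  intros Hz Hy. induction t; simpl; f_equal; auto.
  unfold upd. destruct (Nat.eqb_spec n z).
  - subst. now rewrite Hz, subst_t_var_same.
  - apply subst_t_notin. auto.
Qed.

Lemma subst_fsubst g : forall z u r,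
  r z = tvar z -> (forall y, y <> z -> occurs_t z (r y) = false) ->
  subst z u (fsubst r g) = fsubst (upd r z u) g.
Proof.
  induction g; simpl; intros z u r Hz Hy; try (f_equal; apply subst_t_tsubst; auto; fail).
  - f_equal; auto.
  - f_equal; auto.
  - destruct (Nat.eqb_spec z n).
    + subst. f_equal. apply fsubst_ext. intros y _. unfold upd. destruct (Nat.eqb_spec y n); auto.
    + f_equal. rewrite IHg.
      * apply fsubst_ext. intros y _. unfold upd.
        destruct (Nat.eqb_spec y z), (Nat.eqb_spec y n); subst; auto; congruence.
      * unfold upd. destruct (Nat.eqb_spec z n); [congruence|auto].
      * intros y Hyz. unfold upd. destruct (Nat.eqb_spec y n); simpl; auto.
        apply Nat.eqb_neq. congruence.
Qed.

(** * Quantifier rules *)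

Lemma gen x A : |- A -> |- fall x A.
Proof. apply Pr_gen. Qed.

Lemma all_elim_at x t A : substitutable x t A -> |- fimp (fall x A) (subst x t A).
Proof. intros; apply Pr_log; constructor; auto. Qed.

Lemma all_elim x A : |- fimp (fall x A) A.
Proof.
  pose proof (all_elim_at x (tvar x) A (substitutable_var_self x A)) as H.
  now rewrite subst_var_self in H.
Qed.

Lemma proves_subst x t A : substitutable x t A -> |- A -> |- subst x t A.
Proof. intros Ht H. premise (gen x A H). now apply all_elim_at. Qed.

Lemma all_intro x A B : free_in x A = false -> |- fimp A B -> |- fimp A (fall x B).
Proof. intros Hx H. premise (gen x _ H). apply Pr_log. now constructor. Qed.

Lemma all_imp_all y A B : |- fimp (fall y (fimp A B)) (fimp (fall y A) (fall y B)).
Proof.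
  assert (H : |- fimp (fand (fall y (fimp A B)) (fall y A)) B).
  { pose proof (all_elim y (fimp A B)). pose proof (all_elim y A).
    premise H0; premise H; taut. }
  apply all_intro with (x := y) in H; [|simpl; now rewrite Nat.eqb_refl].
  premise H. taut.
Qed.

Lemma all_mono y A B : |- fimp A B -> |- fimp (fall y A) (fall y B).
Proof. intros H. premise (gen y _ H). apply all_imp_all. Qed.

Lemma ex_intro x t A : substitutable x t A -> |- fimp (subst x t A) (fex x A).
Proof.
  intros H. pose proof (all_elim_at x t (fneg A) H) as L. simpl in L. premise L. taut.
Qed.

Lemma ex_elim x A B : free_in x B = false -> |- fimp A B -> |- fimp (fex x A) B.
Proof.
  intros Hx H.
  assert (H1 : |- fimp (fneg B) (fneg A)) by (premise H; taut).
  apply all_intro with (x := x) in H1; [|simpl; auto].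
  premise H1. taut.
Qed.

(** * Instances of the equality and arithmetic axioms *)

Fixpoint qfree (f : form) : Prop :=
  match f with
  | feq _ _ | flt _ _ | fgt _ _ => True
  | fneg g => qfree g
  | fimp g h => qfree g /\ qfree h
  | fall _ _ => False
  end.

Lemma qfree_subst x u f : qfree f -> qfree (subst x u f).
Proof. induction f; simpl; tauto. Qed.

Lemma proves_subst_qfree x t f : qfree f -> |- f -> |- subst x t f.
Proof. intros Hq. apply proves_subst. induction f; simpl in *; tauto. Qed.

Definition subst012 (s t r : term) (y : nat) : term :=
  match y with 0 => s | 1 => t | 2 => r | _ => tvar y end.

(** The axioms speak about the variables [x0], [x1], [x2]; they are instantiated by first
    renaming these to fresh variables [F], [F+1], [F+2] and then substituting. *)
Lemma tsubst012_by_renaming s t r T F :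
  3 + vbound_t s + vbound_t t + vbound_t r <= F -> vbound_t T <= 3 ->
  subst_t (F+2) r (subst_t (F+1) t (subst_t F s
    (subst_t 2 (tvar (F+2)) (subst_t 1 (tvar (F+1)) (subst_t 0 (tvar F) T)))))
  = tsubst (subst012 s t r) T.
Proof.
  intros HF; induction T; cbn -[Nat.max]; intros HT; split_max; try (f_equal; auto).
  destruct n as [|[|[|n]]]; try lia; destruct F as [|[|[|G]]]; try lia;
  repeat (cbn; match goal with |- context [Nat.eqb ?a ?b] => destruct (Nat.eqb_spec a b); try lia end);
  rewrite ?(subst_t_notin _ _ s), ?(subst_t_notin _ _ t) by (apply occurs_t_vbound; lia);
  reflexivity.
Qed.

Lemma proves_subst012 s t r f :
  qfree f -> vbound f <= 3 -> |- f -> |- fsubst (subst012 s t r) f.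
Proof.
  intros Hq Hv H.
  set (F := 3 + vbound_t s + vbound_t t + vbound_t r).
  assert (HF : 3 + vbound_t s + vbound_t t + vbound_t r <= F) by (unfold F; lia). clearbody F.
  replace (fsubst (subst012 s t r) f) with (subst (F+2) r (subst (F+1) t (subst F s
    (subst 2 (tvar (F+2)) (subst 1 (tvar (F+1)) (subst 0 (tvar F) f)))))).
  - repeat apply proves_subst_qfree; repeat apply qfree_subst; auto.
  - clear H. induction f; cbn -[Nat.max] in *; split_max; try tauto;
      rewrite ?tsubst012_by_renaming by (tauto || lia); f_equal; tauto.
Qed.

Ltac axiom_instance ax s t r :=
  let H := fresh in
  pose proof ax as H; apply (proves_subst012 s t r) in H;
  [exact H | simpl; tauto | simpl; lia].

Lemma feq_refl s : |- feq s s.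
Proof. axiom_instance (Pr_log _ LEq_refl) s s s. Qed.

Lemma feq_eucl s t r : |- fimp (feq s t) (fimp (feq s r) (feq t r)).
Proof. axiom_instance (Pr_log _ LEq_eq) s t r. Qed.

Lemma feq_sym s t : |- fimp (feq s t) (feq t s).
Proof. premise (feq_refl s). premise (feq_eucl s t s). taut. Qed.

Lemma feq_trans s t r : |- fimp (feq s t) (fimp (feq t r) (feq s r)).
Proof. premise (feq_sym s t). premise (feq_eucl t s r). taut. Qed.

Lemma feq_succ s t : |- fimp (feq s t) (feq (tsucc s) (tsucc t)).
Proof. axiom_instance (Pr_log _ LEq_succ) s t s. Qed.

Lemma feq_plusl s t r : |- fimp (feq s t) (feq (tplus s r) (tplus t r)).
Proof. axiom_instance (Pr_log _ LEq_plusl) s t r. Qed.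

Lemma feq_plusr s t r : |- fimp (feq s t) (feq (tplus r s) (tplus r t)).
Proof. axiom_instance (Pr_log _ LEq_plusr) s t r. Qed.

Lemma feq_multl s t r : |- fimp (feq s t) (feq (tmult s r) (tmult t r)).
Proof. axiom_instance (Pr_log _ LEq_multl) s t r. Qed.

Lemma feq_multr s t r : |- fimp (feq s t) (feq (tmult r s) (tmult r t)).
Proof. axiom_instance (Pr_log _ LEq_multr) s t r. Qed.

Lemma feq_ltl s t r : |- fimp (feq s t) (fimp (flt s r) (flt t r)).
Proof. axiom_instance (Pr_log _ LEq_ltl) s t r. Qed.

Lemma feq_ltr s t r : |- fimp (feq s t) (fimp (flt r s) (flt r t)).
Proof. axiom_instance (Pr_log _ LEq_ltr) s t r. Qed.

Lemma feq_gtl s t r : |- fimp (feq s t) (fimp (fgt s r) (fgt t r)).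
Proof. axiom_instance (Pr_log _ LEq_gtl) s t r. Qed.

Lemma feq_gtr s t r : |- fimp (feq s t) (fimp (fgt r s) (fgt r t)).
Proof. axiom_instance (Pr_log _ LEq_gtr) s t r. Qed.

Lemma succ_neq_zero s : |- fneg (feq (tsucc s) tzero).
Proof. axiom_instance (Pr_ax _ PA_succ0) s s s. Qed.

Lemma succ_inj s t : |- fimp (feq (tsucc s) (tsucc t)) (feq s t).
Proof. axiom_instance (Pr_ax _ PA_succinj) s t s. Qed.

Lemma plus_zero s : |- feq (tplus s tzero) s.
Proof. axiom_instance (Pr_ax _ PA_plus0) s s s. Qed.

Lemma plus_succ s t : |- feq (tplus s (tsucc t)) (tsucc (tplus s t)).
Proof. axiom_instance (Pr_ax _ PA_plusS) s t s. Qed.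

Lemma mult_zero s : |- feq (tmult s tzero) tzero.
Proof. axiom_instance (Pr_ax _ PA_mult0) s s s. Qed.

Lemma mult_succ s t : |- feq (tmult s (tsucc t)) (tplus (tmult s t) s).
Proof. axiom_instance (Pr_ax _ PA_multS) s t s. Qed.

Lemma proves_feq_sym s t : |- feq s t -> |- feq t s.
Proof. apply mp, feq_sym. Qed.

Lemma proves_feq_trans s t r : |- feq s t -> |- feq t r -> |- feq s r.
Proof. intros H1 H2. premise H2. premise H1. apply feq_trans. Qed.

Lemma proves_feq_succ s t : |- feq s t -> |- feq (tsucc s) (tsucc t).
Proof. apply mp, feq_succ. Qed.

Lemma proves_feq_plus s s' t t' : |- feq s s' -> |- feq t t' -> |- feq (tplus s t) (tplus s' t').
Proof.
  intros Hs Ht. apply proves_feq_trans with (tplus s' t).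
  - premise Hs. apply feq_plusl.
  - premise Ht. apply feq_plusr.
Qed.

Lemma proves_feq_mult s s' t t' : |- feq s s' -> |- feq t t' -> |- feq (tmult s t) (tmult s' t').
Proof.
  intros Hs Ht. apply proves_feq_trans with (tmult s' t).
  - premise Hs. apply feq_multl.
  - premise Ht. apply feq_multr.
Qed.

(** * Equality and numerals *)

Lemma feq_subst_t z s t T : |- fimp (feq s t) (feq (subst_t z s T) (subst_t z t T)).
Proof.
  induction T as [n| |T IHT|T1 IHT1 T2 IHT2|T1 IHT1 T2 IHT2]; simpl.
  - destruct (Nat.eqb z n); [apply imp_refl|premise (feq_refl (tvar n)); taut].
  - premise (feq_refl tzero). taut.
  - premise IHT. premise (feq_succ (subst_t z s T) (subst_t z t T)). taut.
  - set (s1 := subst_t z s T1) in *. set (t1 := subst_t z t T1) in *.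
    set (s2 := subst_t z s T2) in *. set (t2 := subst_t z t T2) in *.
    premise IHT1; premise IHT2; premise (feq_plusl s1 t1 s2); premise (feq_plusr s2 t2 t1).
    premise (feq_trans (tplus s1 s2) (tplus t1 s2) (tplus t1 t2)). taut.
  - set (s1 := subst_t z s T1) in *. set (t1 := subst_t z t T1) in *.
    set (s2 := subst_t z s T2) in *. set (t2 := subst_t z t T2) in *.
    premise IHT1; premise IHT2; premise (feq_multl s1 t1 s2); premise (feq_multr s2 t2 t1).
    premise (feq_trans (tmult s1 s2) (tmult t1 s2) (tmult t1 t2)). taut.
Qed.

Lemma feq_subst f : forall z s t, substitutable z s f -> substitutable z t f ->
  |- fimp (feq s t) (fimp (subst z s f) (subst z t f)).
Proof.
  induction f as [a b|a b|a b|g IHg|g IHg h IHh|y g IHg]; intros z s t Hs Ht; simpl in *.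
  - pose proof (feq_subst_t z s t a). pose proof (feq_subst_t z s t b).
    premise H; premise H0.
    premise (feq_sym (subst_t z s a) (subst_t z t a)).
    premise (feq_trans (subst_t z t a) (subst_t z s a) (subst_t z s b)).
    premise (feq_trans (subst_t z t a) (subst_t z s b) (subst_t z t b)). taut.
  - premise (feq_subst_t z s t a); premise (feq_subst_t z s t b).
    premise (feq_ltl (subst_t z s a) (subst_t z t a) (subst_t z s b)).
    premise (feq_ltr (subst_t z s b) (subst_t z t b) (subst_t z t a)). taut.
  - premise (feq_subst_t z s t a); premise (feq_subst_t z s t b).
    premise (feq_gtl (subst_t z s a) (subst_t z t a) (subst_t z s b)).
    premise (feq_gtr (subst_t z s b) (subst_t z t b) (subst_t z t a)). taut.
  - premise (IHg z t s Ht Hs). premise (feq_sym s t). taut.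
  - destruct Hs, Ht.
    premise (IHg z t s H1 H); premise (IHh z s t H0 H2); premise (feq_sym s t). taut.
  - destruct (free_in z (fall y g)) eqn:Fr.
    + pose proof Fr as Fr'. simpl in Fr'.
      destruct Hs as [Hs|[Hs1 Hs2]]; [congruence|]. destruct Ht as [Ht|[Ht1 Ht2]]; [congruence|].
      simpl in Fr. destruct (Nat.eqb z y) eqn:E; simpl in Fr; [congruence|].
      pose proof (IHg z s t Hs2 Ht2) as H.
      apply all_intro with (x := y) in H; [|simpl; now rewrite Hs1, Ht1].
      premise H. premise (all_imp_all y (subst z s g) (subst z t g)). taut.
    + pose proof (subst_notin z s _ Fr). pose proof (subst_notin z t _ Fr).
      simpl in H, H0. rewrite H, H0. premise (imp_refl (fall y g)). taut.
Qed.

Lemma num_plus m n : |- feq (tplus (num m) (num n)) (num (m + n)).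
Proof.
  induction n; simpl.
  - rewrite Nat.add_0_r. apply plus_zero.
  - rewrite Nat.add_succ_r. simpl.
    eapply proves_feq_trans; [apply plus_succ|]. now apply proves_feq_succ.
Qed.

Lemma num_mult m n : |- feq (tmult (num m) (num n)) (num (m * n)).
Proof.
  induction n; simpl.
  - rewrite Nat.mul_0_r. apply mult_zero.
  - rewrite Nat.mul_succ_r.
    eapply proves_feq_trans; [apply mult_succ|].
    eapply proves_feq_trans; [|apply num_plus].
    apply proves_feq_plus; [exact IHn|apply feq_refl].
Qed.

Lemma num_neq a b : a <> b -> |- fneg (feq (num a) (num b)).
Proof.
  revert b; induction a; intros [|b] H; simpl; try congruence.
  - premise (succ_neq_zero (num b)). premise (feq_sym tzero (tsucc (num b))). taut.
  - apply succ_neq_zero.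
  - premise (IHa b ltac:(congruence)). premise (succ_inj (num a) (num b)). taut.
Qed.

Fixpoint tval (e : nat -> nat) (t : term) : nat :=
  match t with
  | tvar y => e y
  | tzero => 0
  | tsucc a => S (tval e a)
  | tplus a b => tval e a + tval e b
  | tmult a b => tval e a * tval e b
  end.

Definition numerals (e : nat -> nat) : nat -> term := fun y => num (e y).

Lemma tsubst_numerals_eval e t : |- feq (tsubst (numerals e) t) (num (tval e t)).
Proof.
  induction t; simpl.
  - apply feq_refl.
  - apply feq_refl.
  - now apply proves_feq_succ.
  - eapply proves_feq_trans; [apply proves_feq_plus; eassumption|apply num_plus].
  - eapply proves_feq_trans; [apply proves_feq_mult; eassumption|apply num_mult].
Qed.

(** * Order *)

Ltac eqbs := repeat (cbn -[Nat.eqb]; match goal with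
  |- context [Nat.eqb ?a ?b] => destruct (Nat.eqb_spec a b); try lia; try congruence end).

Lemma induction_rule x a :
  |- subst x tzero a -> |- fimp a (subst x (tsucc (tvar x)) a) -> |- a.
Proof.
  intros H0 HS. premise (gen x _ HS). premise H0.
  pose proof (Pr_ax _ (PA_ind x a)) as I.
  premise I. premise (all_elim x a). taut.
Qed.

Lemma zero_or_succ_var w v : w <> v ->
  |- for_ (feq (tvar w) tzero) (fex v (feq (tvar w) (tsucc (tvar v)))).
Proof.
  intros Hwv. apply induction_rule with (x := w); unfold for_, fex; eqbs.
  - premise (feq_refl tzero). taut.
  - pose proof (ex_intro v (tvar w) (feq (tsucc (tvar w)) (tsucc (tvar v))) ltac:(simpl; auto)) as H.
    unfold fex in H. revert H; eqbs; intros H.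
    premise H; premise (feq_refl (tsucc (tvar w))). taut.
Qed.

Lemma zero_or_succ_elim s v B : occurs_t v s = false -> free_in v B = false ->
  |- fimp (feq s tzero) B -> |- fimp (feq s (tsucc (tvar v))) B -> |- B.
Proof.
  intros Hs HB H0 HS.
  pose proof (zero_or_succ_var (S v) v ltac:(lia)) as Z.
  apply (proves_subst (S v) s) in Z; [|unfold for_, fex; simpl; split; auto].
  unfold for_, fex in Z; revert Z; eqbs; intros Z.
  apply ex_elim with (x := v) in HS; auto.
  premise Z; premise H0; premise HS; unfold fex; taut.
Qed.

Lemma zero_plus s : |- feq (tplus tzero s) s.
Proof.
  assert (H : |- feq (tplus tzero (tvar 0)) (tvar 0)).
  { apply induction_rule with (x := 0); simpl; [apply plus_zero|].
    premise (plus_succ tzero (tvar 0)); premise (feq_succ (tplus tzero (tvar 0)) (tvar 0)).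
    premise (feq_trans (tplus tzero (tsucc (tvar 0))) (tsucc (tplus tzero (tvar 0))) (tsucc (tvar 0))).
    taut. }
  axiom_instance H s s s.
Qed.

Lemma succ_plus a b : |- feq (tplus (tsucc a) b) (tplus a (tsucc b)).
Proof.
  assert (H : |- feq (tplus (tsucc (tvar 0)) (tvar 1)) (tsucc (tplus (tvar 0) (tvar 1)))).
  { apply induction_rule with (x := 1); simpl.
    - apply proves_feq_trans with (tsucc (tvar 0)); [apply plus_zero|].
      apply proves_feq_succ, proves_feq_sym, plus_zero.
    - set (x := tvar 0). set (w := tvar 1).
      premise (feq_succ (tplus (tsucc x) w) (tsucc (tplus x w))).
      premise (feq_trans (tplus (tsucc x) (tsucc w)) (tsucc (tplus (tsucc x) w))
                 (tsucc (tsucc (tplus x w)))).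
      premise (plus_succ (tsucc x) w).
      pose proof (proves_feq_sym _ _ (proves_feq_succ _ _ (plus_succ x w))).
      premise H.
      premise (feq_trans (tplus (tsucc x) (tsucc w)) (tsucc (tsucc (tplus x w)))
                 (tsucc (tplus x (tsucc w)))).
      taut. }
  apply (proves_feq_trans _ (tsucc (tplus a b))); [axiom_instance H a b b|].
  apply proves_feq_sym, plus_succ.
Qed.

Definition avoid12 (s : term) : Prop := occurs_t 1 s = false /\ occurs_t 2 s = false.

Lemma avoid12_closed t : closed_t t -> avoid12 t.
Proof. intros C; split; apply C. Qed.

Lemma avoid12_num n : avoid12 (num n).
Proof. apply avoid12_closed, num_closed. Qed.

Lemma avoid12_succ t : avoid12 t -> avoid12 (tsucc t).
Proof. auto. Qed.

Lemma lt_def s t : avoid12 s -> avoid12 t ->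
  |- fiff (flt s t) (fex 2 (feq (tplus s (tsucc (tvar 2))) t)).
Proof.
  intros [Hs1 Hs2] [Ht1 Ht2].
  pose proof (Pr_ax _ PA_lt) as H.
  apply (proves_subst 0 s) in H; [|cbn; rewrite Hs2; tauto].
  apply (proves_subst 1 t) in H; [|cbn; rewrite Ht2; tauto].
  cbn in H. now rewrite !(subst_t_notin 1 t s) in H.
Qed.

Lemma lt_intro s r t : avoid12 s -> avoid12 t -> |- fimp (feq (tplus s (tsucc r)) t) (flt s t).
Proof.
  intros Hs Ht. pose proof (ex_intro 2 r (feq (tplus s (tsucc (tvar 2))) t) ltac:(simpl; auto)) as X.
  simpl in X. rewrite !subst_t_notin in X by (apply Hs || apply Ht).
  premise (lt_def s t Hs Ht); premise X. taut.
Qed.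

Lemma lt_elim s t B : avoid12 s -> avoid12 t -> free_in 2 B = false ->
  |- fimp (feq (tplus s (tsucc (tvar 2))) t) B -> |- fimp (flt s t) B.
Proof.
  intros Hs Ht HB H. apply ex_elim with (x := 2) in H; auto.
  premise (lt_def s t Hs Ht); premise H. taut.
Qed.

Lemma not_lt_zero s : avoid12 s -> |- fneg (flt s tzero).
Proof.
  intros Hs.
  assert (H : |- fimp (flt s tzero) (fneg (flt s tzero))).
  { apply lt_elim; auto; [split; auto|simpl; destruct Hs as [_ ->]; auto|].
    premise (plus_succ s (tvar 2)); premise (succ_neq_zero (tplus s (tvar 2))).
    premise (feq_trans (tsucc (tplus s (tvar 2))) (tplus s (tsucc (tvar 2))) tzero).
    premise (feq_sym (tplus s (tsucc (tvar 2))) (tsucc (tplus s (tvar 2)))). taut. }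
  premise H. taut.
Qed.

Lemma lt_succ_cases s t : avoid12 s -> avoid12 t ->
  |- fimp (flt s (tsucc t)) (for_ (flt s t) (feq s t)).
Proof.
  intros Hs Ht. pose proof Hs as [Hs1 Hs2]. pose proof Ht as [Ht1 Ht2].
  set (v := 3 + vbound_t s + vbound_t t).
  assert (Hvs : occurs_t v s = false) by (apply occurs_t_vbound; unfold v; lia).
  assert (Hvt : occurs_t v t = false) by (apply occurs_t_vbound; unfold v; lia).
  set (x := tvar 2). set (B := for_ (flt s t) (feq s t)).
  apply lt_elim; auto; [unfold B, for_; simpl; now rewrite Hs2, Ht2|].
  assert (Hx : |- fimp (feq (tplus s (tsucc x)) (tsucc t)) (feq (tplus s x) t)).
  { premise (plus_succ s x). premise (succ_inj (tplus s x) t).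
    premise (feq_trans (tsucc (tplus s x)) (tplus s (tsucc x)) (tsucc t)).
    premise (feq_sym (tplus s (tsucc x)) (tsucc (tplus s x))). taut. }
  premise Hx. apply zero_or_succ_elim with (s := x) (v := v); auto.
  - unfold B, for_. simpl. now rewrite Hvs, Hvt.
  - pose proof (feq_subst_t 2 x tzero (tplus s (tvar 2))) as C. simpl in C.
    rewrite !subst_t_notin in C by assumption.
    premise C; premise (plus_zero s).
    premise (feq_trans s (tplus s tzero) t); premise (feq_sym (tplus s tzero) s).
    premise (feq_sym (tplus s x) (tplus s tzero)); premise (feq_trans (tplus s tzero) (tplus s x) t).
    unfold B. taut.
  - pose proof (feq_subst_t 2 x (tsucc (tvar v)) (tplus s (tvar 2))) as C. simpl in C.
    rewrite !subst_t_notin in C by assumption.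
    premise C; premise (lt_intro s (tvar v) t Hs Ht).
    premise (feq_sym (tplus s x) (tplus s (tsucc (tvar v)))).
    premise (feq_trans (tplus s (tsucc (tvar v))) (tplus s x) t).
    unfold B. taut.
Qed.

Lemma num_lt a b : a < b -> |- flt (num a) (num b).
Proof.
  intros H. eapply mp; [apply (lt_intro _ (num (b - a - 1))); apply avoid12_num|].
  pose proof (num_plus a (S (b - a - 1))) as E. replace (a + S (b - a - 1)) with b in E by lia.
  exact E.
Qed.

Lemma num_not_lt a b : b <= a -> |- fneg (flt (num a) (num b)).
Proof.
  revert a; induction b; intros a H.
  - apply not_lt_zero, avoid12_num.
  - premise (lt_succ_cases (num a) (num b) (avoid12_num a) (avoid12_num b)).
    premise (IHb a ltac:(lia)). premise (num_neq a b ltac:(lia)). simpl. taut.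
Qed.

Lemma lt_succ_of_lt s t : avoid12 s -> avoid12 t -> |- fimp (flt s t) (flt s (tsucc t)).
Proof.
  intros Hs Ht. apply lt_elim; auto; [simpl; now rewrite (proj2 Hs), (proj2 Ht)|].
  set (x := tvar 2).
  premise (plus_succ s (tsucc x)); premise (feq_succ (tplus s (tsucc x)) t).
  premise (feq_trans (tplus s (tsucc (tsucc x))) (tsucc (tplus s (tsucc x))) (tsucc t)).
  premise (lt_intro s (tsucc x) (tsucc t) Hs (avoid12_succ t Ht)). taut.
Qed.

Lemma lt_succ_of_eq s t : avoid12 s -> avoid12 t -> |- fimp (feq s t) (flt s (tsucc t)).
Proof.
  intros Hs Ht.
  assert (E : |- feq (tplus s (tsucc tzero)) (tsucc s))
    by (eapply proves_feq_trans; [apply plus_succ|apply proves_feq_succ, plus_zero]).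
  premise E; premise (feq_succ s t); premise (feq_trans (tplus s (tsucc tzero)) (tsucc s) (tsucc t)).
  premise (lt_intro s tzero (tsucc t) Hs (avoid12_succ t Ht)). taut.
Qed.

Lemma succ_le_of_lt t s : avoid12 t -> avoid12 s ->
  |- fimp (flt t s) (for_ (feq s (tsucc t)) (flt (tsucc t) s)).
Proof.
  intros Ht Hs. pose proof Ht as [Ht1 Ht2]. pose proof Hs as [Hs1 Hs2].
  set (v := 3 + vbound_t s + vbound_t t).
  assert (Hvs : occurs_t v s = false) by (apply occurs_t_vbound; unfold v; lia).
  assert (Hvt : occurs_t v t = false) by (apply occurs_t_vbound; unfold v; lia).
  set (x := tvar 2). set (B := for_ (feq s (tsucc t)) (flt (tsucc t) s)).
  apply lt_elim; auto; [unfold B, for_; simpl; now rewrite Hs2, Ht2|].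
  apply zero_or_succ_elim with (s := x) (v := v); auto.
  - unfold B, for_. simpl. now rewrite Hvs, Hvt.
  - pose proof (feq_subst_t 2 x tzero (tplus t (tsucc (tvar 2)))) as C. simpl in C.
    rewrite !subst_t_notin in C by assumption.
    assert (E : |- feq (tplus t (tsucc tzero)) (tsucc t))
      by (eapply proves_feq_trans; [apply plus_succ|apply proves_feq_succ, plus_zero]).
    premise C; premise E.
    premise (feq_sym (tplus t (tsucc x)) (tplus t (tsucc tzero))).
    premise (feq_trans (tplus t (tsucc tzero)) (tplus t (tsucc x)) s).
    premise (feq_sym (tplus t (tsucc tzero)) (tsucc t)).
    premise (feq_trans (tsucc t) (tplus t (tsucc tzero)) s).
    premise (feq_sym (tsucc t) s). unfold B. taut.
  - pose proof (feq_subst_t 2 x (tsucc (tvar v)) (tplus t (tsucc (tvar 2)))) as C. simpl in C.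
    rewrite !subst_t_notin in C by assumption.
    premise C; premise (succ_plus t (tsucc (tvar v))).
    premise (feq_sym (tplus t (tsucc x)) (tplus t (tsucc (tsucc (tvar v))))).
    premise (feq_trans (tplus t (tsucc (tsucc (tvar v)))) (tplus t (tsucc x)) s).
    premise (feq_trans (tplus (tsucc t) (tsucc (tvar v))) (tplus t (tsucc (tsucc (tvar v)))) s).
    premise (lt_intro (tsucc t) (tvar v) s (avoid12_succ t Ht) Hs). unfold B. taut.
Qed.

Lemma zero_le s : avoid12 s -> |- for_ (feq s tzero) (flt tzero s).
Proof.
  intros Hs. set (v := 3 + vbound_t s).
  assert (Hvs : occurs_t v s = false) by (apply occurs_t_vbound; unfold v; lia).
  apply zero_or_succ_elim with (s := s) (v := v); auto.
  - unfold for_. simpl. now rewrite Hvs.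
  - unfold for_. taut.
  - premise (zero_plus (tsucc (tvar v))); premise (feq_sym s (tsucc (tvar v))).
    premise (feq_trans (tplus tzero (tsucc (tvar v))) (tsucc (tvar v)) s).
    premise (lt_intro tzero (tvar v) s (avoid12_num 0) Hs). unfold for_. taut.
Qed.

Lemma trichotomy_num s n : avoid12 s ->
  |- for_ (flt s (num n)) (for_ (feq s (num n)) (flt (num n) s)).
Proof.
  intros Hs. induction n as [|n IHn].
  - simpl. premise (zero_le s Hs). unfold for_. taut.
  - simpl. premise IHn.
    premise (lt_succ_of_lt s (num n) Hs (avoid12_num n)).
    premise (lt_succ_of_eq s (num n) Hs (avoid12_num n)).
    premise (succ_le_of_lt (num n) s (avoid12_num n) Hs). taut.
Qed.

Lemma ball_num_intro z psi n : z <> 1 -> z <> 2 ->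
  (forall i, i < n -> |- subst z (num i) psi) ->
  |- fall z (fimp (flt (tvar z) (num n)) psi).
Proof.
  intros Z1 Z2 H. apply gen.
  assert (Hz : avoid12 (tvar z)) by (split; apply Nat.eqb_neq; lia).
  induction n as [|n IHn].
  - simpl. premise (not_lt_zero (tvar z) Hz). taut.
  - pose proof (feq_subst psi z (num n) (tvar z) (substitutable_num _ _ _) (substitutable_var_self z psi))
      as L. rewrite subst_var_self in L.
    premise (lt_succ_cases (tvar z) (num n) Hz (avoid12_num n)); premise L.
    premise (feq_sym (tvar z) (num n)); premise (H n ltac:(lia)).
    premise (IHn ltac:(intros; apply H; lia)). simpl. taut.
Qed.

Lemma ball_num_refute z psi n i : i < n -> |- fneg (subst z (num i) psi) ->
  |- fneg (fall z (fimp (flt (tvar z) (num n)) psi)).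
Proof.
  intros Hi H. pose proof (all_elim_at z (num i) (fimp (flt (tvar z) (num n)) psi)
    (substitutable_num _ _ _)) as L.
  simpl in L. rewrite Nat.eqb_refl, subst_t_num in L.
  premise L; premise (num_lt i n Hi); premise H. taut.
Qed.

(** * Completeness for bounded formulas *)

Definition eupd (e : nat -> nat) (z n : nat) : nat -> nat :=
  fun y => if Nat.eqb y z then n else e y.

Fixpoint sat (e : nat -> nat) (f : form) : Prop :=
  match f with
  | feq a b => tval e a = tval e b
  | flt a b => tval e a < tval e b
  | fgt a b => tval e a > tval e b
  | fneg g => ~ sat e g
  | fimp g h => sat e g -> sat e h
  | fall z g => forall n, sat (eupd e z n) g
  end.

Lemma tval_ext e1 e2 t :
  (forall y, occurs_t y t = true -> e1 y = e2 y) -> tval e1 t = tval e2 t.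
Proof.
  induction t; simpl; intros H; auto using Nat.eqb_refl.
  all: rewrite IHt1, IHt2; auto; intros y Hy; apply H; rewrite Hy; auto using orb_true_r.
Qed.

Lemma tval_num e n : tval e (num n) = n.
Proof. induction n; simpl; auto. Qed.

Lemma tval_eupd e z n t : occurs_t z t = false -> tval (eupd e z n) t = tval e t.
Proof.
  intros H. apply tval_ext. intros y Hy. unfold eupd. destruct (Nat.eqb_spec y z); congruence.
Qed.

Lemma eupd_same e z n : eupd e z n z = n.
Proof. unfold eupd. now rewrite Nat.eqb_refl. Qed.

(** The bound variable must differ from [x1] and [x2], which the axiom for [<] uses. *)
Inductive bounded : form -> Prop :=
| bounded_eq a b : bounded (feq a b)
| bounded_lt a b : bounded (flt a b)
| bounded_neg g : bounded g -> bounded (fneg g)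
| bounded_imp g h : bounded g -> bounded h -> bounded (fimp g h)
| bounded_ball z t g : occurs_t z t = false -> z <> 1 -> z <> 2 -> bounded g ->
    bounded (fall z (fimp (flt (tvar z) t) g)).

Definition decides (e : nat -> nat) (f : form) : Prop :=
  (sat e f -> |- fsubst (numerals e) f) /\ (~ sat e f -> |- fneg (fsubst (numerals e) f)).

Lemma decides_eq e a b : decides e (feq a b).
Proof.
  pose proof (tsubst_numerals_eval e a) as Ha. pose proof (tsubst_numerals_eval e b) as Hb.
  set (a' := tsubst (numerals e) a) in *. set (b' := tsubst (numerals e) b) in *.
  set (m := tval e a) in *. set (n := tval e b) in *.
  split; simpl; fold a' b' m n; intros Hs.
  - rewrite Hs in Ha. premise Ha; premise Hb; premise (feq_sym b' (num n)).
    premise (feq_trans a' (num n) b'). taut.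
  - premise Ha; premise Hb; premise (num_neq _ _ Hs); premise (feq_sym a' (num m)).
    premise (feq_trans (num m) a' b'); premise (feq_trans (num m) b' (num n)). taut.
Qed.

Lemma decides_lt e a b : decides e (flt a b).
Proof.
  pose proof (tsubst_numerals_eval e a) as Ha. pose proof (tsubst_numerals_eval e b) as Hb.
  set (a' := tsubst (numerals e) a) in *. set (b' := tsubst (numerals e) b) in *.
  set (m := tval e a) in *. set (n := tval e b) in *.
  split; simpl; fold a' b' m n; intros Hs.
  - premise Ha; premise Hb; premise (feq_sym a' (num m)); premise (feq_sym b' (num n)).
    premise (feq_ltl (num m) a' (num n)); premise (feq_ltr (num n) b' a').
    premise (num_lt _ _ Hs). taut.
  - premise Ha; premise Hb.
    premise (feq_ltl a' (num m) b'); premise (feq_ltr b' (num n) (num m)).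
    premise (num_not_lt m n ltac:(lia)). taut.
Qed.

Lemma decides_neg e g : decides e g -> decides e (fneg g).
Proof.
  intros [A B]. split; simpl; intros Hs; auto.
  apply NNPP in Hs. premise (A Hs). taut.
Qed.

Lemma decides_imp e g h : decides e g -> decides e h -> decides e (fimp g h).
Proof.
  intros [A1 B1] [A2 B2]. split; simpl; intros Hs.
  - destruct (classic (sat e g)) as [Hg|Hg].
    + premise (A2 (Hs Hg)). taut.
    + premise (B1 Hg). taut.
  - premise (A1 (NNPP _ (fun Hg => Hs (fun G => False_ind _ (Hg G))))).
    premise (B2 (fun Hh => Hs (fun _ => Hh))). taut.
Qed.

Lemma decides_ball e z t g : occurs_t z t = false -> z <> 1 -> z <> 2 ->
  (forall e, decides e g) -> decides e (fall z (fimp (flt (tvar z) t) g)).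
Proof.
  intros Hzt Z1 Z2 IH. unfold decides.
  set (r := upd (numerals e) z (tvar z)).
  change (fsubst (numerals e) (fall z (fimp (flt (tvar z) t) g))) with
    (fall z (fimp (flt (tsubst r (tvar z)) (tsubst r t)) (fsubst r g))).
  assert (Rz : tsubst r (tvar z) = tvar z) by (simpl; unfold r, upd; now rewrite Nat.eqb_refl).
  assert (Rt : tsubst r t = tsubst (numerals e) t).
  { apply tsubst_ext. intros y Hy. unfold r, upd. destruct (Nat.eqb_spec y z); congruence. }
  rewrite Rz, Rt.
  set (t' := tsubst (numerals e) t). set (n := tval e t).
  assert (Et : |- feq t' (num n)) by apply tsubst_numerals_eval.
  assert (Inst : forall i, subst z (num i) (fsubst r g) = fsubst (numerals (eupd e z i)) g).
  { intros i. unfold r. rewrite subst_fsubst.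
    - apply fsubst_ext. intros y _. unfold upd, numerals, eupd. destruct (Nat.eqb_spec y z); auto.
    - unfold upd. now rewrite Nat.eqb_refl.
    - intros y Hy. unfold upd. destruct (Nat.eqb_spec y z); [congruence|]. apply num_closed. }
  assert (Sat : sat e (fall z (fimp (flt (tvar z) t) g)) <-> forall i, i < n -> sat (eupd e z i) g).
  { simpl. unfold n. setoid_rewrite tval_eupd; auto. setoid_rewrite eupd_same. reflexivity. }
  rewrite Sat. split; intros Hs.
  - assert (B : |- fall z (fimp (flt (tvar z) (num n)) (fsubst r g))).
    { apply ball_num_intro; auto. intros i Hi. rewrite Inst. apply (IH (eupd e z i)), Hs, Hi. }
    premise B. apply all_mono.
    premise Et; premise (feq_ltr t' (num n) (tvar z)). taut.
  - apply not_all_ex_not in Hs as [i Hi].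
    assert (Hi1 : i < n) by tauto. assert (Hi2 : ~ sat (eupd e z i) g) by tauto.
    pose proof (ball_num_refute z (fsubst r g) n i Hi1) as R.
    rewrite Inst in R. specialize (R (proj2 (IH _) Hi2)).
    assert (M : |- fimp (fall z (fimp (flt (tvar z) t') (fsubst r g)))
                        (fall z (fimp (flt (tvar z) (num n)) (fsubst r g)))).
    { apply all_mono. premise Et; premise (feq_sym t' (num n)).
      premise (feq_ltr (num n) t' (tvar z)). taut. }
    premise R; premise M. taut.
Qed.

Lemma bounded_decides f : bounded f -> forall e, decides e f.
Proof.
  induction 1; intros e;
    auto using decides_eq, decides_lt, decides_neg, decides_imp, decides_ball.
Qed.

Lemma bounded_sentence_proves f : bounded f -> sentence f -> sat (fun _ => 0) f -> |- f.
Proof.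
  intros B C S. pose proof (proj1 (bounded_decides f B (fun _ => 0)) S) as H.
  now rewrite fsubst_sentence in H.
Qed.

Lemma bounded_sentence_refutes f : bounded f -> sentence f -> ~ sat (fun _ => 0) f -> |- fneg f.
Proof.
  intros B C S. pose proof (proj2 (bounded_decides f B (fun _ => 0)) S) as H.
  now rewrite fsubst_sentence in H.
Qed.

(** * Cantor pairing and Gödel's beta function *)

Lemma cpair_double a b : 2 * cpair a b = (a + b) * (a + b + 1) + 2 * b.
Proof.
  assert (E : exists t, (a + b) * (a + b + 1) = 2 * t).
  { induction (a + b) as [|n [t Ht]]; [exists 0|exists (t + n + 1)]; nia. }
  destruct E as [t Ht]. unfold cpair. rewrite Ht, (Nat.mul_comm 2 t), Nat.div_mul; lia.
Qed.

Lemma cpair_inj a b a' b' : cpair a b = cpair a' b' -> a = a' /\ b = b'.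
Proof.
  intros H. pose proof (cpair_double a b). pose proof (cpair_double a' b').
  assert (E : a + b = a' + b').
  { destruct (lt_eq_lt_dec (a + b) (a' + b')) as [[L|E]|L]; auto; exfalso.
    - assert ((a + b + 1) * (a + b + 1 + 1) <= (a' + b') * (a' + b' + 1))
        by (apply Nat.mul_le_mono; lia). nia.
    - assert ((a' + b' + 1) * (a' + b' + 1 + 1) <= (a + b) * (a + b + 1))
        by (apply Nat.mul_le_mono; lia). nia. }
  rewrite E in H0. split; nia.
Qed.

Lemma divide_fact d n : 1 <= d <= n -> Nat.divide d (fact n).
Proof.
  induction n; intros H; [lia|]. change (fact (S n)) with (S n * fact n).
  destruct (Nat.eq_dec d (S n)) as [->|Hd].
  - apply Nat.divide_factor_l.
  - apply Nat.divide_mul_r, IHn. lia.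
Qed.

Lemma gcd_mul_r_1 m a b : Nat.gcd m a = 1 -> Nat.gcd m b = 1 -> Nat.gcd m (a * b) = 1.
Proof.
  intros Ha Hb. set (g := Nat.gcd m (a * b)).
  assert (Gm : Nat.divide g m) by apply Nat.gcd_divide_l.
  assert (Gab : Nat.divide g (a * b)) by apply Nat.gcd_divide_r.
  assert (Ga : Nat.gcd g a = 1).
  { apply Nat.divide_1_r. rewrite <- Ha. apply Nat.gcd_greatest.
    - eapply Nat.divide_trans; [apply Nat.gcd_divide_l|exact Gm].
    - apply Nat.gcd_divide_r. }
  apply Nat.divide_1_r. rewrite <- Hb.
  apply Nat.gcd_greatest; [exact Gm|eapply Nat.gauss; eauto].
Qed.

Definition prod_list (l : list nat) : nat := fold_right Nat.mul 1 l.

Lemma prod_list_gcd_1 m l : (forall x, In x l -> Nat.gcd m x = 1) -> Nat.gcd m (prod_list l) = 1.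
Proof.
  induction l; simpl; intros H.
  - apply Nat.divide_1_r, Nat.gcd_divide_r.
  - apply gcd_mul_r_1; auto.
Qed.

Lemma nth_divide_prod_list l i : i < length l -> Nat.divide (nth i l 0) (prod_list l).
Proof.
  revert i; induction l; simpl; intros i Hi; [lia|].
  destruct i; [apply Nat.divide_factor_l|apply Nat.divide_mul_r, IHl; lia].
Qed.

Lemma prod_list_pos l : (forall x, In x l -> 0 < x) -> 0 < prod_list l.
Proof. induction l; simpl; intros H; auto. apply Nat.mul_pos_pos; auto. Qed.

Lemma chinese_remainder ms xs : length ms = length xs ->
  (forall i, i < length ms -> nth i xs 0 < nth i ms 0) ->
  (forall i j, i < length ms -> j < length ms -> i <> j -> Nat.gcd (nth i ms 0) (nth j ms 0) = 1) ->
  exists a, forall i, i < length ms -> a mod (nth i ms 0) = nth i xs 0.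
Proof.
  revert xs; induction ms as [|m ms IH]; intros xs Hl Hx Hc.
  - exists 0. simpl; intros; lia.
  - destruct xs as [|x xs]; simpl in Hl; [lia|].
    destruct (IH xs ltac:(lia)) as [a' Ha'].
    { intros i Hi. apply (Hx (S i)). simpl; lia. }
    { intros i j Hi Hj Hij. apply (Hc (S i) (S j)); simpl; lia. }
    assert (HxM : x < m) by (apply (Hx 0); simpl; lia).
    set (P := prod_list ms).
    assert (HP : 0 < P).
    { apply prod_list_pos. intros y Hy. apply In_nth with (d := 0) in Hy as [i [Hi <-]].
      pose proof (Hx (S i) ltac:(simpl; lia)). simpl in *. lia. }
    assert (Cop : Nat.gcd P m = 1).
    { rewrite Nat.gcd_comm. apply prod_list_gcd_1. intros y Hy.
      apply In_nth with (d := 0) in Hy as [i [Hi <-]]. apply (Hc 0 (S i)); simpl; lia. }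
    destruct (Nat.gcd_bezout_pos P m HP) as [u [v Huv]]. rewrite Cop in Huv.
    set (D := x + m * a' - a').
    exists (a' + u * D * P).
    assert (E : a' + u * D * P = x + m * (a' + D * v)).
    { replace (u * D * P) with (D * (u * P)) by ring. rewrite Huv. unfold D. nia. }
    intros [|i] Hi; simpl.
    + rewrite E, (Nat.mul_comm m), Nat.Div0.mod_add. now apply Nat.mod_small.
    + destruct (nth_divide_prod_list ms i ltac:(simpl in Hi; lia)) as [c Hc'].
      fold P in Hc'. rewrite Hc'.
      replace (a' + u * D * (c * nth i ms 0)) with (a' + (u * D * c) * nth i ms 0) by ring.
      rewrite Nat.Div0.mod_add. apply Ha'. simpl in Hi; lia.
Qed.

Definition beta (a b i : nat) : nat := a mod (1 + (i + 1) * b).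

Lemma beta_moduli_coprime n i j : i < j < n ->
  Nat.gcd (1 + (i + 1) * fact n) (1 + (j + 1) * fact n) = 1.
Proof.
  intros Hij. set (b := fact n). set (g := Nat.gcd (1 + (i + 1) * b) (1 + (j + 1) * b)).
  assert (Gi : Nat.divide g (1 + (i + 1) * b)) by apply Nat.gcd_divide_l.
  assert (Gj : Nat.divide g (1 + (j + 1) * b)) by apply Nat.gcd_divide_r.
  assert (Gd : Nat.divide g (j - i)).
  { replace (j - i) with ((1 + (i + 1) * b) * (j + 1) - (1 + (j + 1) * b) * (i + 1)) by nia.
    apply Nat.divide_sub_r; now apply Nat.divide_mul_l. }
  assert (Gb : Nat.divide g b) by (eapply Nat.divide_trans; [exact Gd|apply divide_fact; lia]).
  apply Nat.divide_1_r.
  replace 1 with ((1 + (i + 1) * b) - (i + 1) * b) by lia.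
  apply Nat.divide_sub_r; [exact Gi|now apply Nat.divide_mul_r].
Qed.

Lemma beta_exists (l : list nat) : exists a b, forall i, i < length l -> beta a b i = nth i l 0.
Proof.
  set (N := S (length l + list_sum l)). set (b := fact N).
  set (ms := map (fun i => 1 + (i + 1) * b) (seq 0 (length l))).
  assert (Lms : length ms = length l) by (unfold ms; now rewrite length_map, length_seq).
  assert (Nms : forall i, i < length l -> nth i ms 0 = 1 + (i + 1) * b).
  { intros i Hi. unfold ms.
    rewrite nth_indep with (d' := (fun i => 1 + (i + 1) * b) 0) by (now rewrite length_map, length_seq).
    rewrite (map_nth (fun i => 1 + (i + 1) * b)). now rewrite seq_nth. }
  assert (Hb : N <= b) by (unfold b; clear; induction N; simpl; [|pose proof (lt_O_fact N)]; nia).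
  destruct (chinese_remainder ms l Lms) as [a Ha].
  - intros i Hi. rewrite Lms in Hi. rewrite Nms by auto.
    assert (nth i l 0 <= list_sum l).
    { clear -Hi. revert i Hi; induction l; simpl; intros [|i] Hi; try lia.
      specialize (IHl i ltac:(lia)). lia. }
    unfold N in Hb. nia.
  - intros i j Hi Hj Hij. rewrite Lms in Hi, Hj. rewrite !Nms by auto.
    destruct (Nat.lt_gt_cases i j) as [[L|L] _]; auto.
    + apply beta_moduli_coprime. unfold N. lia.
    + rewrite Nat.gcd_comm. apply beta_moduli_coprime. unfold N. lia.
  - exists a, b. intros i Hi. unfold beta. rewrite <- Nms by auto. apply Ha. lia.
Qed.

Lemma beta_le a b i : beta a b i <= a.
Proof. apply Nat.Div0.mod_le. Qed.

(** * A bounded formula for the diagonal function *)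

Lemma occurs_t_num y n : occurs_t y (num n) = false.
Proof. apply num_closed. Qed.

Lemma eqb_add_l M i j : Nat.eqb (M + i) (M + j) = Nat.eqb i j.
Proof. destruct (Nat.eqb_spec (M+i) (M+j)), (Nat.eqb_spec i j); auto; lia. Qed.

Ltac rewrite_neqs := repeat match goal with
  |- context [Nat.eqb ?a ?b] => rewrite (proj2 (Nat.eqb_neq a b)) by lia end.
Ltac simpl_vars := repeat progress (cbn -[Nat.eqb num cpair];
  rewrite ?eqb_add_l, ?subst_t_num, ?occurs_t_num; cbn -[num Nat.eqb cpair]; rewrite_neqs).

(** [R] with the numeral [k] plugged in for [x_z], in a form whose code is computed from
    [k] and the code of [R] by pairing alone. *)
Definition plug (z k : nat) (R : form) : form := fall z (fimp (feq (tvar z) (num k)) R).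

Definition plug_code (z k c : nat) : nat :=
  cpair 5 (cpair z (cpair 4 (cpair (cpair 0 (cpair (cpair 0 z) (code_t (num k)))) c))).

Lemma code_plug z k R : code (plug z k R) = plug_code z k (code R).
Proof. reflexivity. Qed.

Definition ball (z : nat) (t : term) (g : form) : form := fall z (fimp (flt (tvar z) t) g).
Definition bex (z : nat) (t : term) (g : form) : form := fneg (ball z t (fneg g)).

(** [2 z = (a + b) (a + b + 1) + 2 b], i.e. [z = cpair a b]. *)
Definition pairF (z a b : term) : form :=
  feq (tplus z z) (tplus (tplus (tmult (tplus a b) (tsucc (tplus a b))) b) b).

Definition modulusT (i b : term) : term := tsucc (tmult (tsucc i) b).

(** The formulas below are parametrised by an offset [M]; their bound variables are
    [x_(M+2)], ..., [x_(M+18)], so that they do not clash with those of a given formula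
    when [M] is large.  [x_(M+18)] is the quotient in [betaF]. *)
Definition betaF M (a b i r : term) : form :=
  bex (M+18) (tsucc a)
    (fand (feq a (tplus (tmult (tvar (M+18)) (modulusT i b)) r)) (flt r (modulusT i b))).

(** [code_t (num (S i)) = cpair 2 (code_t (num i))]: one step of the beta-coded sequence
    of numeral codes, indexed by [x_(M+15)]. *)
Definition numeral_stepF M (a b : term) : form :=
  bex (M+16) (tsucc a) (bex (M+17) (tsucc a)
    (fand (betaF M a b (tvar (M+15)) (tvar (M+16)))
      (fand (betaF M a b (tsucc (tvar (M+15))) (tvar (M+17)))
            (pairF (tvar (M+17)) (num 2) (tvar (M+16)))))).

(** With [U = cpair rA rB] and witnesses [rA, rB, a, b, c, s1, ..., s5] in
    [x_(M+5)], ..., [x_(M+14)]: [beta a b] lists the codes of the numerals [0, ..., U],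
    [c] is the code of [num U], and [Y = plug_code M U (if sel then rB else rA)]. *)
Definition graph_matrixF M (sel : bool) (U Y : term) : form :=
  let rA := tvar (M+5) in let rB := tvar (M+6) in let a := tvar (M+7) in let b := tvar (M+8) in
  let c := tvar (M+9) in let s1 := tvar (M+10) in let s2 := tvar (M+11) in
  let s3 := tvar (M+12) in let s4 := tvar (M+13) in let s5 := tvar (M+14) in
  fand (pairF U rA rB)
  (fand (betaF M a b tzero (num 1))
  (fand (ball (M+15) U (numeral_stepF M a b))
  (fand (betaF M a b U c)
  (fand (pairF s1 (num (cpair 0 M)) c)
  (fand (pairF s2 (num 0) s1)
  (fand (pairF s3 s2 (if sel then rB else rA))
  (fand (pairF s4 (num 4) s3)
  (fand (pairF s5 (num M) s4)
        (pairF Y (num 5) s5))))))))).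

Definition graph_boundedF M sel (U P Y : term) : form :=
  let p := tsucc P in
  bex (M+5) p (bex (M+6) p (bex (M+7) p (bex (M+8) p (bex (M+9) p (bex (M+10) p
  (bex (M+11) p (bex (M+12) p (bex (M+13) p (bex (M+14) p (graph_matrixF M sel U Y)))))))))).

Definition graph_belowF M sel (U P : term) : form :=
  bex (M+4) (tsucc P) (graph_boundedF M sel U P (tvar (M+4))).

(** [P] is the least bound below which witnesses exist; this makes the graph provably
    functional. *)
Definition graph_leastF M sel (U P V : term) : form :=
  fand (graph_belowF M sel U P)
  (fand (ball (M+3) P (fneg (graph_belowF M sel U (tvar (M+3)))))
  (fand (flt V (tsucc P)) (graph_boundedF M sel U P V))).

Definition graphF M sel (U V : term) : form := fex (M+2) (graph_leastF M sel U (tvar (M+2)) V).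

Ltac unfold_graph := unfold graph_belowF, graph_boundedF, graph_matrixF, numeral_stepF, betaF,
  ball, bex, fand, pairF, modulusT.

Lemma subst_graph_belowF M sel z u U P : z < M + 4 ->
  subst z u (graph_belowF M sel U P) = graph_belowF M sel (subst_t z u U) (subst_t z u P).
Proof. intros Hz. destruct sel; unfold_graph; simpl_vars; reflexivity. Qed.

Lemma subst_graph_boundedF M sel z u U P Y : z < M + 5 ->
  subst z u (graph_boundedF M sel U P Y) =
  graph_boundedF M sel (subst_t z u U) (subst_t z u P) (subst_t z u Y).
Proof. intros Hz. destruct sel; unfold_graph; simpl_vars; reflexivity. Qed.

Lemma subst_graph_leastF M sel z u U P V : z < M + 3 ->
  subst z u (graph_leastF M sel U P V) =
  graph_leastF M sel (subst_t z u U) (subst_t z u P) (subst_t z u V).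
Proof.
  intros Hz. unfold graph_leastF, fand, ball. cbn -[graph_belowF graph_boundedF Nat.eqb num].
  rewrite !(proj2 (Nat.eqb_neq z (M+3))) by lia. cbn -[graph_belowF graph_boundedF Nat.eqb num].
  rewrite !subst_graph_belowF, subst_graph_boundedF by lia.
  cbn -[graph_belowF graph_boundedF Nat.eqb num].
  now rewrite !(proj2 (Nat.eqb_neq z (M+3))) by lia.
Qed.

Lemma subst_graphF M sel z u U V : z < M + 2 ->
  subst z u (graphF M sel U V) = graphF M sel (subst_t z u U) (subst_t z u V).
Proof.
  intros Hz. unfold graphF, fex. cbn -[graph_leastF Nat.eqb num].
  rewrite !(proj2 (Nat.eqb_neq z (M+2))) by lia. rewrite subst_graph_leastF by lia.
  cbn -[graph_leastF Nat.eqb num]. now rewrite !(proj2 (Nat.eqb_neq z (M+2))) by lia.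
Qed.

Definition vars_below (lo : nat) (t : term) : Prop := forall w, lo <= w -> occurs_t w t = false.

Lemma vars_below_num lo n : vars_below lo (num n).
Proof. intros w _. apply num_closed. Qed.

Lemma vars_below_var lo v : v < lo -> vars_below lo (tvar v).
Proof. intros H w Hw. simpl. apply Nat.eqb_neq. lia. Qed.

Lemma vars_below_mono lo lo' t : lo <= lo' -> vars_below lo t -> vars_below lo' t.
Proof. intros H A w Hw. apply A. lia. Qed.

Ltac widen := eapply vars_below_mono; [|eassumption]; lia.

Ltac occurs_fresh := cbn [occurs_t orb]; rewrite ?eqb_add_l, ?occurs_t_num;
  repeat match goal with H : vars_below _ ?t |- context [occurs_t _ ?t] => rewrite H by lia end;
  rewrite_neqs; reflexivity.

Ltac split_free_var y M :=
  repeat match goal with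
  | |- context [Nat.eqb y (M + ?k)] =>
      destruct (Nat.eqb_spec y (M + k)) as [->|?];
      [ repeat match goal with H : vars_below _ _ |- _ => rewrite H by lia end; simpl_vars | ]
  end.

Lemma free_in_graph_belowF M sel U P y : vars_below (M+4) U -> vars_below (M+4) P ->
  free_in y (graph_belowF M sel U P) = true -> occurs_t y U = true \/ occurs_t y P = true.
Proof.
  intros HU HP. destruct (occurs_t y U) eqn:EU; auto. destruct (occurs_t y P) eqn:EP; auto.
  destruct sel; unfold_graph; simpl_vars; rewrite ?EU, ?EP; simpl_vars;
    split_free_var y M; rewrite ?EU, ?EP; simpl_vars; discriminate.
Qed.

Lemma free_in_graph_boundedF M sel U P Y y :
  vars_below (M+5) U -> vars_below (M+5) P -> vars_below (M+5) Y ->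
  free_in y (graph_boundedF M sel U P Y) = true ->
  occurs_t y U = true \/ occurs_t y P = true \/ occurs_t y Y = true.
Proof.
  intros HU HP HY. destruct (occurs_t y U) eqn:EU; auto. destruct (occurs_t y P) eqn:EP; auto.
  destruct (occurs_t y Y) eqn:EY; auto.
  destruct sel; unfold_graph; simpl_vars; rewrite ?EU, ?EP, ?EY; simpl_vars;
    split_free_var y M; rewrite ?EU, ?EP, ?EY; simpl_vars; discriminate.
Qed.

Lemma free_in_graph_leastF M sel U P V y :
  vars_below (M+3) U -> vars_below (M+3) P -> vars_below (M+3) V ->
  free_in y (graph_leastF M sel U P V) = true ->
  occurs_t y U = true \/ occurs_t y P = true \/ occurs_t y V = true.
Proof.
  intros HU HP HV H. unfold graph_leastF, fand, ball in H. cbn -[graph_belowF graph_boundedF] in H.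
  repeat rewrite ?orb_true_iff, ?andb_true_iff, ?negb_true_iff in H.
  assert (A4 : forall t, vars_below (M+3) t -> vars_below (M+4) t)
    by (intros; apply vars_below_mono with (M+3); auto; lia).
  assert (A5 : forall t, vars_below (M+3) t -> vars_below (M+5) t)
    by (intros; apply vars_below_mono with (M+3); auto; lia).
  destruct H as [H|[[H1 [[H2|H2]|H2]]|[[H|H]|H]]]; auto.
  - apply free_in_graph_belowF in H; auto; tauto.
  - congruence.
  - apply free_in_graph_belowF in H2; auto; [|apply vars_below_var; lia].
    destruct H2 as [H2|H2]; auto. simpl in H2. congruence.
  - apply free_in_graph_boundedF in H; auto; tauto.
Qed.

Lemma ball_bounded z t g :
  occurs_t z t = false -> z <> 1 -> z <> 2 -> bounded g -> bounded (ball z t g).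
Proof. intros; constructor; auto. Qed.

Lemma bex_bounded z t g :
  occurs_t z t = false -> z <> 1 -> z <> 2 -> bounded g -> bounded (bex z t g).
Proof. intros; repeat constructor; auto. Qed.

Lemma fand_bounded a b : bounded a -> bounded b -> bounded (fand a b).
Proof. intros; repeat constructor; auto. Qed.

Ltac solve_bounded lemmas :=
  repeat first [ apply fand_bounded | apply bex_bounded | apply ball_bounded | apply bounded_neg
               | apply bounded_eq | apply bounded_lt | lemmas ];
  try lia; try occurs_fresh; try (apply vars_below_var; lia).

Lemma betaF_bounded M a b i r : 3 <= M -> vars_below (M+5) a -> bounded (betaF M a b i r).
Proof. intros. unfold betaF. solve_bounded idtac. Qed.

Lemma numeral_stepF_bounded M a b : 3 <= M -> vars_below (M+5) a -> bounded (numeral_stepF M a b).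
Proof. intros. unfold numeral_stepF. solve_bounded ltac:(apply betaF_bounded). Qed.

Lemma graph_boundedF_bounded M sel U P Y : 3 <= M ->
  vars_below (M+5) U -> vars_below (M+5) P -> bounded (graph_boundedF M sel U P Y).
Proof.
  intros. unfold graph_boundedF, graph_matrixF.
  solve_bounded ltac:(first [apply betaF_bounded | apply numeral_stepF_bounded]).
Qed.

Lemma graph_belowF_bounded M sel U P : 3 <= M ->
  vars_below (M+4) U -> vars_below (M+4) P -> bounded (graph_belowF M sel U P).
Proof.
  intros. unfold graph_belowF. solve_bounded ltac:(apply graph_boundedF_bounded);
    widen.
Qed.

Lemma graph_leastF_bounded M sel U P V : 3 <= M ->
  vars_below (M+3) U -> vars_below (M+3) P -> bounded (graph_leastF M sel U P V).
Proof.
  intros. unfold graph_leastF.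
  solve_bounded ltac:(first [apply graph_belowF_bounded | apply graph_boundedF_bounded]);
    widen.
Qed.

Arguments eupd : simpl never.

Lemma sat_fand e a b : sat e (fand a b) <-> sat e a /\ sat e b.
Proof. unfold fand. simpl. split; [intros H; apply NNPP; tauto | tauto]. Qed.

Lemma sat_ball e z t g : occurs_t z t = false ->
  (sat e (ball z t g) <-> forall n, n < tval e t -> sat (eupd e z n) g).
Proof.
  intros H. unfold ball. simpl.
  split; intros H1 n; specialize (H1 n); rewrite eupd_same, tval_eupd in *; auto.
Qed.

Lemma sat_bex e z t g : occurs_t z t = false ->
  (sat e (bex z t g) <-> exists n, n < tval e t /\ sat (eupd e z n) g).
Proof.
  intros H. unfold bex.
  change (~ sat e (ball z t (fneg g)) <-> exists n, n < tval e t /\ sat (eupd e z n) g).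
  rewrite sat_ball by auto. simpl. split.
  - intros H1. apply not_all_ex_not in H1 as [n Hn]. exists n. split; [|apply NNPP]; tauto.
  - intros [n [Hn Hs]] H1. exact (H1 n Hn Hs).
Qed.

Lemma sat_pairF e z a b : sat e (pairF z a b) <-> tval e z = cpair (tval e a) (tval e b).
Proof.
  unfold pairF. simpl. pose proof (cpair_double (tval e a) (tval e b)).
  replace (S (tval e a + tval e b)) with (tval e a + tval e b + 1) by lia. lia.
Qed.

Lemma sat_betaF M e a b i r : occurs_t (M+18) a = false -> occurs_t (M+18) b = false ->
  occurs_t (M+18) i = false -> occurs_t (M+18) r = false ->
  (sat e (betaF M a b i r) <-> tval e r = beta (tval e a) (tval e b) (tval e i)).
Proof.
  intros Ha Hb Hi Hr. unfold betaF. rewrite sat_bex by (simpl; auto).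
  unfold beta. set (m := 1 + (tval e i + 1) * tval e b).
  assert (Ev : forall q, tval (eupd e (M+18) q) (modulusT i b) = m /\
    tval (eupd e (M+18) q) a = tval e a /\ tval (eupd e (M+18) q) r = tval e r).
  { intros q. rewrite !tval_eupd by (simpl; rewrite ?Hi, ?Hb; auto). simpl. unfold m. lia. }
  setoid_rewrite sat_fand. cbn [sat tval]. split.
  - intros [q [Hq [H1 H2]]]. destruct (Ev q) as (E1 & E2 & E3). rewrite eupd_same in H1.
    apply (Nat.mod_unique _ _ q); lia.
  - intros Hr'. exists (tval e a / m). destruct (Ev (tval e a / m)) as (E1 & E2 & E3).
    rewrite eupd_same, E1, E2, E3, Hr'. split; [|split].
    + enough (tval e a / m <= tval e a) by lia.
      apply Nat.Div0.div_le_upper_bound. unfold m; nia.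
    + pose proof (Nat.div_mod_eq (tval e a) m). lia.
    + apply Nat.mod_upper_bound. unfold m; lia.
Qed.

Lemma eupd_add e M i j n : eupd e (M+i) n (M+j) = if Nat.eqb j i then n else e (M+j).
Proof. unfold eupd. now rewrite eqb_add_l. Qed.

Ltac simpl_env := repeat (cbn [tval] in *; rewrite ?eupd_add, ?tval_num in *; cbn [Nat.eqb] in *).

Lemma sat_numeral_stepF M e : sat e (numeral_stepF M (tvar (M+7)) (tvar (M+8))) <->
  beta (e (M+7)) (e (M+8)) (S (e (M+15))) = cpair 2 (beta (e (M+7)) (e (M+8)) (e (M+15))).
Proof.
  unfold numeral_stepF. rewrite sat_bex by occurs_fresh. simpl_env. split.
  - intros [r1 [_ H]]. rewrite sat_bex in H by occurs_fresh. simpl_env.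
    destruct H as [r2 [_ H]]. rewrite !sat_fand, !sat_betaF, sat_pairF in H by occurs_fresh.
    simpl_env. destruct H as (-> & -> & E). exact E.
  - intros E. pose proof (beta_le (e (M+7)) (e (M+8))) as Hle.
    exists (beta (e (M+7)) (e (M+8)) (e (M+15))). split; [specialize (Hle (e (M+15))); lia|].
    rewrite sat_bex by occurs_fresh. simpl_env.
    exists (beta (e (M+7)) (e (M+8)) (S (e (M+15)))). split; [specialize (Hle (S (e (M+15)))); lia|].
    rewrite !sat_fand, !sat_betaF, sat_pairF by occurs_fresh. simpl_env. auto.
Qed.

Definition GraphMatrix M (sel : bool) (u y rA rB a b c s1 s2 s3 s4 s5 : nat) : Prop :=
  u = cpair rA rB /\ beta a b 0 = 1 /\
  (forall i, i < u -> beta a b (S i) = cpair 2 (beta a b i)) /\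
  c = beta a b u /\ s1 = cpair (cpair 0 M) c /\ s2 = cpair 0 s1 /\
  s3 = cpair s2 (if sel then rB else rA) /\ s4 = cpair 4 s3 /\ s5 = cpair M s4 /\ y = cpair 5 s5.

Lemma sat_graph_matrixF M sel e U Y : vars_below (M+15) U -> vars_below (M+15) Y ->
  (sat e (graph_matrixF M sel U Y) <-> GraphMatrix M sel (tval e U) (tval e Y)
     (e (M+5)) (e (M+6)) (e (M+7)) (e (M+8)) (e (M+9))
     (e (M+10)) (e (M+11)) (e (M+12)) (e (M+13)) (e (M+14))).
Proof.
  intros HU HY. unfold graph_matrixF, GraphMatrix.
  rewrite !sat_fand, !sat_pairF, !sat_betaF by occurs_fresh. rewrite sat_ball by occurs_fresh.
  setoid_rewrite sat_numeral_stepF. setoid_rewrite eupd_add. cbn [Nat.eqb].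
  destruct sel; simpl_env; split; intros H; intuition congruence.
Qed.

Definition GraphBounded M sel (u p y : nat) : Prop :=
  exists rA, rA < S p /\ exists rB, rB < S p /\ exists a, a < S p /\ exists b, b < S p /\
  exists c, c < S p /\ exists s1, s1 < S p /\ exists s2, s2 < S p /\ exists s3, s3 < S p /\
  exists s4, s4 < S p /\ exists s5, s5 < S p /\ GraphMatrix M sel u y rA rB a b c s1 s2 s3 s4 s5.

Definition GraphBelow M sel (u p : nat) : Prop := exists y, y < S p /\ GraphBounded M sel u p y.

Ltac fresh_tval := repeat match goal with
  | H : vars_below _ ?t |- context [tval (eupd _ ?z _) ?t] => rewrite (tval_eupd _ z _ t) by (apply H; lia)
  | H : vars_below _ ?t, H' : context [tval (eupd _ ?z _) ?t] |- _ =>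
      rewrite (tval_eupd _ z _ t) in H' by (apply H; lia)
  end.

Ltac bex_witness x :=
  rewrite sat_bex by occurs_fresh; exists x; split; [cbn [tval]; fresh_tval; assumption|].

Lemma sat_graph_boundedF M sel e U P Y :
  vars_below (M+5) U -> vars_below (M+5) P -> vars_below (M+5) Y ->
  (sat e (graph_boundedF M sel U P Y) <-> GraphBounded M sel (tval e U) (tval e P) (tval e Y)).
Proof.
  intros HU HP HY. unfold graph_boundedF, GraphBounded.
  assert (HU' : vars_below (M+15) U) by widen.
  assert (HY' : vars_below (M+15) Y) by widen.
  split; intros H.
  - repeat (rewrite sat_bex in H by occurs_fresh; destruct H as [? [? H]]).
    rewrite sat_graph_matrixF in H by auto. cbn [tval] in *. fresh_tval. simpl_env.
    do 10 (eexists; split; [shelve|]). exact H. Unshelve. all: assumption.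
  - destruct H as (rA & ? & rB & ? & a & ? & b & ? & c & ? & s1 & ? & s2 & ? & s3 & ? & s4 & ? & s5 & ? & H).
    bex_witness rA. bex_witness rB. bex_witness a. bex_witness b. bex_witness c.
    bex_witness s1. bex_witness s2. bex_witness s3. bex_witness s4. bex_witness s5.
    rewrite sat_graph_matrixF by auto. fresh_tval. simpl_env. exact H.
Qed.

Lemma sat_graph_belowF M sel e U P : vars_below (M+4) U -> vars_below (M+4) P ->
  (sat e (graph_belowF M sel U P) <-> GraphBelow M sel (tval e U) (tval e P)).
Proof.
  intros HU HP. unfold graph_belowF, GraphBelow.
  assert (V5 : forall t, vars_below (M+4) t -> vars_below (M+5) t) by (intros; widen).
  rewrite sat_bex by occurs_fresh. cbn [tval].
  split; intros [y [Hy H]]; exists y; split; auto;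
    [rewrite sat_graph_boundedF in H|rewrite sat_graph_boundedF];
    auto using vars_below_var with arith; fresh_tval; simpl_env; now rewrite ?eupd_same in *.
Qed.

Definition diag_code M (sel : bool) (rA rB : nat) : nat :=
  plug_code M (cpair rA rB) (if sel then rB else rA).

Lemma GraphMatrix_output M sel y rA rB a b c s1 s2 s3 s4 s5 rA0 rB0 :
  GraphMatrix M sel (cpair rA0 rB0) y rA rB a b c s1 s2 s3 s4 s5 -> y = diag_code M sel rA0 rB0.
Proof.
  intros (H1 & H2 & H3 & H4 & H5 & H6 & H7 & H8 & H9 & H10).
  apply cpair_inj in H1 as [-> ->].
  assert (T : forall i, i <= cpair rA rB -> beta a b i = code_t (num i)).
  { induction i; intros Hi; [exact H2|]. rewrite H3, IHi by lia. reflexivity. }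
  unfold diag_code, plug_code. rewrite <- T by lia. subst. reflexivity.
Qed.

Lemma GraphBounded_output M sel p y rA rB :
  GraphBounded M sel (cpair rA rB) p y -> y = diag_code M sel rA rB.
Proof.
  intros (? & _ & ? & _ & ? & _ & ? & _ & ? & _ & ? & _ & ? & _ & ? & _ & ? & _ & ? & _ & H).
  exact (GraphMatrix_output _ _ _ _ _ _ _ _ _ _ _ _ _ _ _ H).
Qed.

Lemma GraphBelow_exists M sel rA rB : exists p, GraphBelow M sel (cpair rA rB) p.
Proof.
  set (k := cpair rA rB).
  destruct (beta_exists (map (fun i => code_t (num i)) (seq 0 (S k)))) as [a [b Hab]].
  rewrite length_map, length_seq in Hab.
  assert (Hb : forall i, i <= k -> beta a b i = code_t (num i)).
  { intros i Hi. rewrite Hab by lia.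
    rewrite nth_indep with (d' := (fun i => code_t (num i)) 0) by (rewrite length_map, length_seq; lia).
    rewrite (map_nth (fun i => code_t (num i))). now rewrite seq_nth by lia. }
  set (c := code_t (num k)).
  set (s1 := cpair (cpair 0 M) c). set (s2 := cpair 0 s1).
  set (s3 := cpair s2 (if sel then rB else rA)). set (s4 := cpair 4 s3).
  set (s5 := cpair M s4). set (y := cpair 5 s5).
  exists (y + rA + rB + a + b + c + s1 + s2 + s3 + s4 + s5), y. split; [lia|].
  exists rA. split; [lia|]. exists rB. split; [lia|]. exists a. split; [lia|].
  exists b. split; [lia|]. exists c. split; [lia|]. exists s1. split; [lia|].
  exists s2. split; [lia|]. exists s3. split; [lia|]. exists s4. split; [lia|].
  exists s5. split; [lia|].
  repeat split; auto.
  - now rewrite Hb by lia.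
  - intros i Hi. now rewrite !Hb by lia.
  - unfold c. now rewrite Hb.
Qed.

Lemma exists_least (P : nat -> Prop) :
  (exists n, P n) -> exists n, P n /\ forall m, m < n -> ~ P m.
Proof.
  intros [n Hn]. induction n as [n IH] using (well_founded_induction lt_wf).
  destruct (classic (exists m, m < n /\ P m)) as [[m [Hm Pm]]|H].
  - exact (IH m Hm Pm).
  - exists n. split; auto. intros m Hm Pm. apply H. eauto.
Qed.

Ltac num_sentence lemma :=
  let y := fresh "y" in let E := fresh "E" in
  intros y; destruct (free_in y _) eqn:E; auto;
  apply lemma in E; try apply vars_below_num; rewrite !occurs_t_num in E; intuition discriminate.

Lemma graph_belowF_sentence M sel k i : sentence (graph_belowF M sel (num k) (num i)).
Proof. num_sentence free_in_graph_belowF. Qed.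

Lemma graph_boundedF_sentence M sel k i j : sentence (graph_boundedF M sel (num k) (num i) (num j)).
Proof. num_sentence free_in_graph_boundedF. Qed.

Lemma graph_leastF_sentence M sel k i j : sentence (graph_leastF M sel (num k) (num i) (num j)).
Proof. num_sentence free_in_graph_leastF. Qed.

Fixpoint bound_vars (f : form) : list nat :=
  match f with
  | feq _ _ | flt _ _ | fgt _ _ => []
  | fneg g => bound_vars g
  | fimp g h => bound_vars g ++ bound_vars h
  | fall z g => z :: bound_vars g
  end.

Lemma substitutable_bound_vars z t f :
  (forall w, In w (bound_vars f) -> occurs_t w t = false) -> substitutable z t f.
Proof.
  induction f; simpl; intros H; auto.
  - split; [apply IHf1|apply IHf2]; intros; apply H, in_or_app; auto.
  - right. split; auto.
Qed.

Lemma bound_vars_graph_belowF M sel U P w : In w (bound_vars (graph_belowF M sel U P)) -> M + 4 <= w.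
Proof.
  destruct sel; unfold_graph; cbn -[Nat.add];
    intros H; repeat (destruct H as [H|H]; [subst; lia|]); destruct H.
Qed.

Section GraphRepresents.

Variables (M : nat) (sel : bool) (rA rB P : nat).
Hypothesis HM : 3 <= M.
Hypothesis HP : GraphBelow M sel (cpair rA rB) P.
Hypothesis HPmin : forall m, m < P -> ~ GraphBelow M sel (cpair rA rB) m.

Local Notation k := (cpair rA rB).
Local Notation N := (diag_code M sel rA rB).

Lemma proves_graph_belowF_at_least : |- graph_belowF M sel (num k) (num P).
Proof.
  apply bounded_sentence_proves.
  - apply graph_belowF_bounded; auto; apply vars_below_num.
  - apply graph_belowF_sentence.
  - rewrite sat_graph_belowF, !tval_num by apply vars_below_num. exact HP.
Qed.

Lemma proves_graph_belowF_below_least :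
  |- ball (M+3) (num P) (fneg (graph_belowF M sel (num k) (tvar (M+3)))).
Proof.
  apply ball_num_intro; try lia. intros i Hi.
  cbn [subst]. rewrite subst_graph_belowF, !subst_t_num, subst_t_var_same by lia.
  apply bounded_sentence_refutes.
  - apply graph_belowF_bounded; auto; apply vars_below_num.
  - apply graph_belowF_sentence.
  - rewrite sat_graph_belowF, !tval_num by apply vars_below_num. auto.
Qed.

Lemma proves_graph_boundedF_output :
  |- ball (M+1) (num (S P)) (fimp (graph_boundedF M sel (num k) (num P) (tvar (M+1)))
                                  (feq (tvar (M+1)) (num N))).
Proof.
  apply ball_num_intro; try lia. intros i Hi.
  cbn [subst]. rewrite subst_graph_boundedF, !subst_t_num, !subst_t_var_same by lia.
  destruct (Nat.eq_dec i N) as [->|Hne]; [premise (feq_refl (num N)); taut|].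
  assert (R : |- fneg (graph_boundedF M sel (num k) (num P) (num i))).
  { apply bounded_sentence_refutes.
    - apply graph_boundedF_bounded; auto; apply vars_below_num.
    - apply graph_boundedF_sentence.
    - rewrite sat_graph_boundedF, !tval_num by apply vars_below_num.
      intros H. exact (Hne (GraphBounded_output _ _ _ _ _ _ H)). }
  premise R. taut.
Qed.

Lemma proves_graphF_value : |- graphF M sel (num k) (num N).
Proof.
  destruct HP as [y [Hy Hb]]. pose proof (GraphBounded_output _ _ _ _ _ _ Hb); subst y.
  eapply mp; [apply (ex_intro (M+2) (num P)), substitutable_num|].
  rewrite subst_graph_leastF, !subst_t_num, subst_t_var_same by lia.
  apply bounded_sentence_proves.
  - apply graph_leastF_bounded; auto; apply vars_below_num.
  - apply graph_leastF_sentence.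
  - unfold graph_leastF. rewrite !sat_fand, sat_graph_belowF, sat_ball, sat_graph_boundedF
      by (apply vars_below_num || apply occurs_t_num).
    cbn [sat tval]. rewrite !tval_num. repeat split; auto.
    intros n Hn. rewrite sat_graph_belowF by (apply vars_below_num || (apply vars_below_var; lia)).
    rewrite tval_num. cbn [tval]. rewrite eupd_same. auto.
Qed.

Lemma proves_graphF_functional : |- fimp (graphF M sel (num k) (tvar (M+1))) (feq (tvar (M+1)) (num N)).
Proof.
  set (p := tvar (M+2)). set (v := tvar (M+1)).
  assert (Hp : avoid12 p) by (split; apply Nat.eqb_neq; lia).
  pose proof proves_graph_belowF_below_least as Least. unfold ball in Least.
  assert (Smaller : |- fimp (flt p (num P)) (fneg (graph_belowF M sel (num k) p))).
  { assert (S1 : substitutable (M+3) p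
      (fimp (flt (tvar (M+3)) (num P)) (fneg (graph_belowF M sel (num k) (tvar (M+3)))))).
    { apply substitutable_bound_vars. intros w Hw. cbn [bound_vars app] in Hw.
      apply bound_vars_graph_belowF in Hw. apply Nat.eqb_neq. lia. }
    pose proof (all_elim_at (M+3) p _ S1) as L.
    cbn [subst] in L. rewrite subst_graph_belowF, !subst_t_num, subst_t_var_same in L by lia.
    premise L. premise Least. taut. }
  assert (Larger : |- fimp (ball (M+3) p (fneg (graph_belowF M sel (num k) (tvar (M+3)))))
                      (fimp (flt (num P) p) (fneg (graph_belowF M sel (num k) (num P))))).
  { pose proof (all_elim_at (M+3) (num P)
      (fimp (flt (tvar (M+3)) p) (fneg (graph_belowF M sel (num k) (tvar (M+3)))))
      (substitutable_num _ _ _)) as L.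
    cbn [subst] in L. rewrite subst_graph_belowF, !subst_t_num, subst_t_var_same in L by lia.
    unfold p in L. rewrite subst_t_var_other in L by lia. exact L. }
  assert (Equal : |- fimp (feq p (num P))
    (fimp (fand (flt v (tsucc p)) (graph_boundedF M sel (num k) p v))
          (fand (flt v (tsucc (num P))) (graph_boundedF M sel (num k) (num P) v)))).
  { pose proof (feq_subst (fand (flt v (tsucc (tvar (M+2)))) (graph_boundedF M sel (num k) (tvar (M+2)) v))
      (M+2) p (num P) (substitutable_var_self _ _) (substitutable_num _ _ _)) as L.
    unfold p in L at 2. rewrite subst_var_self in L.
    unfold fand in L. cbn [subst subst_t] in L.
    rewrite subst_graph_boundedF, !subst_t_num, subst_t_var_same in L by lia.
    unfold v in L. rewrite subst_t_var_other, Nat.eqb_refl in L by lia. exact L. }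
  pose proof (mp _ _ (all_elim _ _) proves_graph_boundedF_output) as Output.
  change (num (S P)) with (tsucc (num P)) in Output.
  apply ex_elim; [cbn; rewrite occurs_t_num, orb_false_r; apply Nat.eqb_neq; lia|].
  unfold graph_leastF. fold p v.
  premise (trichotomy_num p P Hp); premise Smaller; premise Larger; premise Equal.
  premise proves_graph_belowF_at_least; premise Output. taut.
Qed.

End GraphRepresents.

Lemma graphF_represents M sel rA rB : 3 <= M ->
  |- graphF M sel (num (cpair rA rB)) (num (diag_code M sel rA rB)) /\
  |- fimp (graphF M sel (num (cpair rA rB)) (tvar (M+1)))
          (feq (tvar (M+1)) (num (diag_code M sel rA rB))).
Proof.
  intros HM. destruct (exists_least _ (GraphBelow_exists M sel rA rB)) as [P [HP HPmin]].
  split; [exact (proves_graphF_value M sel rA rB P HM HP HPmin)|].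
  exact (proves_graphF_functional M sel rA rB P HM HP HPmin).
Qed.

(** * The diagonal sentences *)

(** [exists v, graph(x_M, v) /\ phi(v)]: at the pair [k] of the codes of [RA] and [RB], it says
    that [phi] holds of the code of [plug M k RB] if [sel], of [plug M k RA] otherwise. *)
Definition diag_bodyF M sel phi x : form :=
  fex (M+1) (fand (graphF M sel (tvar M) (tvar (M+1))) (subst x (tvar (M+1)) phi)).

Lemma free_in_diag_bodyF M sel phi x y : 3 <= M -> (forall y, free_in y phi = true -> y = x) ->
  free_in y (diag_bodyF M sel phi x) = true -> y = M.
Proof.
  intros HM Ho H. unfold diag_bodyF, fex, fand in H. cbn [free_in] in H.
  repeat rewrite ?orb_true_iff, ?andb_true_iff, ?negb_true_iff, ?orb_false_iff in H.
  destruct H as [H1 [H|H]]; apply Nat.eqb_neq in H1.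
  - unfold graphF, fex in H. cbn [free_in] in H.
    repeat rewrite ?andb_true_iff, ?negb_true_iff in H. destruct H as [H2 H].
    apply Nat.eqb_neq in H2.
    apply free_in_graph_leastF in H; try (apply vars_below_var; lia).
    destruct H as [H|[H|H]]; simpl in H; apply Nat.eqb_eq in H; lia.
  - apply free_in_subst in H as [[H Hx]|H]; [apply Ho in H; congruence|].
    simpl in H. apply Nat.eqb_eq in H. lia.
Qed.

Lemma diag_bodyF_iff M sel phi x rA rB : 3 <= M -> vbound phi <= M ->
  (forall y, free_in y phi = true -> y = x) ->
  |- fiff (subst M (num (cpair rA rB)) (diag_bodyF M sel phi x))
          (subst x (num (diag_code M sel rA rB)) phi).
Proof.
  intros HM Hphi Ho.
  destruct (graphF_represents M sel rA rB HM) as [Value Functional].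
  set (k := cpair rA rB) in *. set (N := diag_code M sel rA rB) in *.
  set (phiV := subst x (tvar (M+1)) phi). set (phiN := subst x (num N) phi).
  assert (Fresh : free_in M phiV = false).
  { destruct (free_in M phiV) eqn:E; auto. apply free_in_subst in E as [[E1 E2]|E].
    - now rewrite free_in_vbound in E1.
    - simpl in E. apply Nat.eqb_eq in E. lia. }
  replace (subst M (num k) (diag_bodyF M sel phi x))
    with (fex (M+1) (fand (graphF M sel (num k) (tvar (M+1))) phiV)).
  2:{ unfold diag_bodyF, fex, fand. cbn [subst]. rewrite (proj2 (Nat.eqb_neq M (M+1))) by lia.
      rewrite subst_graphF, subst_t_var_same, subst_t_var_other by lia.
      fold phiV. now rewrite (subst_notin _ _ phiV Fresh). }
  assert (Forward : |- fimp (fex (M+1) (fand (graphF M sel (num k) (tvar (M+1))) phiV)) phiN).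
  { apply ex_elim; [apply subst_num_closed; auto|].
    assert (L : |- fimp (feq (tvar (M+1)) (num N)) (fimp phiV phiN))
      by (apply feq_subst; [apply substitutable_vbound; lia|apply substitutable_num]).
    premise Functional; premise L. unfold fand. taut. }
  assert (Backward : |- fimp phiN (fex (M+1) (fand (graphF M sel (num k) (tvar (M+1))) phiV))).
  { pose proof (ex_intro (M+1) (num N) (fand (graphF M sel (num k) (tvar (M+1))) phiV)
      (substitutable_num _ _ _)) as X.
    unfold fand in X. cbn [subst] in X.
    rewrite subst_graphF, !subst_t_num, subst_t_var_same in X by lia.
    unfold phiV in X. rewrite subst_rename in X by lia.
    premise X; premise Value. unfold fand. taut. }
  premise Forward; premise Backward. taut.
Qed.

Lemma plug_sentence z k R : (forall y, free_in y R = true -> y = z) -> sentence (plug z k R).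
Proof.
  intros H y. unfold plug. cbn [free_in occurs_t]. rewrite occurs_t_num.
  destruct (Nat.eqb_spec y z); auto. simpl.
  destruct (free_in y R) eqn:E; auto. apply H in E. congruence.
Qed.

Lemma plug_iff z k R : |- fiff (plug z k R) (subst z (num k) R).
Proof.
  pose proof (all_elim_at z (num k) (fimp (feq (tvar z) (num k)) R) (substitutable_num _ _ _)) as L.
  cbn [subst] in L. rewrite subst_t_var_same, subst_t_num in L.
  pose proof (feq_subst R z (num k) (tvar z) (substitutable_num _ _ _) (substitutable_var_self _ _))
    as Lb.
  rewrite subst_var_self in Lb.
  assert (B : |- fimp (subst z (num k) R) (fimp (feq (tvar z) (num k)) R))
    by (premise Lb; premise (feq_sym (tvar z) (num k)); taut).
  apply all_intro with (x := z) in B.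
  - premise L; premise (feq_refl (num k)); premise B. unfold plug. taut.
  - destruct (free_in z (subst z (num k) R)) eqn:E; auto.
    apply free_in_subst in E as [[_ E]|E]; [congruence|]. now rewrite occurs_t_num in E.
Qed.

Theorem mainTheorem1 (phi : form) (x : nat)
  (Hfree : free_in x phi = true)
  (Honly : forall y, free_in y phi = true -> y = x) :
  exists sigma tau : form,
    sentence sigma /\ sentence tau /\
    PA_proves (fiff sigma (subst x (num (code tau)) phi)) /\
    PA_proves (fiff tau (fneg (subst x (num (code sigma)) phi))).
Proof.
  set (M := 3 + vbound phi).
  set (RA := diag_bodyF M true phi x). set (RB := fneg (diag_bodyF M false phi x)).
  set (k := cpair (code RA) (code RB)).
  assert (FA : forall y, free_in y RA = true -> y = M) by (intros y; apply free_in_diag_bodyF; auto; lia).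
  assert (FB : forall y, free_in y RB = true -> y = M) by (intros y; apply free_in_diag_bodyF; auto; lia).
  exists (plug M k RA), (plug M k RB).
  split; [now apply plug_sentence|]. split; [now apply plug_sentence|].
  pose proof (diag_bodyF_iff M true phi x (code RA) (code RB)) as EA.
  pose proof (diag_bodyF_iff M false phi x (code RA) (code RB)) as EB.
  unfold diag_code in EA, EB. rewrite !code_plug. fold k in EA, EB |- *.
  split.
  - premise (plug_iff M k RA). premise (EA ltac:(lia) ltac:(lia) Honly). taut.
  - premise (plug_iff M k RB). premise (EB ltac:(lia) ltac:(lia) Honly). unfold RB. cbn [subst]. taut.
Qed.
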